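(* Let $\mathcal{A}$ be a Desargues affine plane, let $\ell_1=\ell^{OI}$ and $\ell_2$ be lines of $\mathcal{A}$ ($O\neq I$), and let $P_P:\ell_1\to\ell_2$ be a parallel projection. Equip $\ell_1$ with the skew field structure with zero $O$ and unit $I$, and $\ell_2$ with the skew field structure with zero $P_P(O)$ and unit $P_P(I)$. Then for all $A,B,C\in\ell_1$ with $B\neq C$, \[ P_P(r(A,B;C))=r(P_P(A),P_P(B);P_P(C)), \] where the ratio on the left is computed in $\ell_1$ and the ratio on the right in $\ell_2$.
   Context: A Desargues affine plane is an incidence structure of points and lines in which any two distinct points lie on exactly one line, through a point not on a line $\ell$ there is exactly one line disjoint from $\ell$ (Playfair), there exist three non-collinear points, and Desargues' axiom holds: if $A,B,C,A',B',C'$ are points such that the pairwise distinct lines $AA',BB',CC'$ are either all parallel or all pass through one point, and $AB\parallel A'B'$, $BC\parallel B'C'$ (with $AB\neq A'B'$, $BC\neq B'C'$, $A\ne C$, $A'\ne C'$), then $AC\parallel A'C'$. Skew field on a line: for distinct points $O,I$ and points $A,B$ on the line $\ell^{OI}$, addition is defined by: choose a point $B_1\notin\ell^{OI}$; let $P_1$ be the intersection of the line through $B_1$ parallel to $\ell^{OI}$ with the line through $A$ parallel to $OB_1$; then $A+B$ is the intersection of $\ell^{OI}$ with the line through $P_1$ parallel to $BB_1$. Multiplication is defined by: choose $B_1\notin\ell^{OI}$; let $P_1$ be the intersection of the line through $A$ parallel to $IB_1$ with the line $OB_1$; then $A\cdot B$ is the intersection of $\ell^{OI}$ with the line through $P_1$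 parallel to $BB_1$. These operations do not depend on the choice of $B_1$ and make $(\ell^{OI},+,\cdot)$ a skew field with zero $O$ and unit $I$; the same construction applies to any line with any chosen pair of distinct points as zero and unit. $-X$ and $X^{-1}$ denote additive and multiplicative inverses, $X-Y=X+(-Y)$. Ratio of three points on such a line: $r(A,B;C)=(B-C)^{-1}(A-C)$ for $B\neq C$. A parallel projection between lines $\ell_1,\ell_2$ is a map $P_P:\ell_1\to\ell_2$ such that for all $A,B\in\ell_1$ the lines $A\,P_P(A)$ and $B\,P_P(B)$ are parallel (it is a bijection). *)

From Stdlib Require Import Classical ClassicalEpsilon.

Set Implicit Arguments.

Section Plane.
Variables (Pt Ln : Type) (inc : Pt -> Ln -> Prop).

Definition par (l m : Ln) : Prop :=
  l = m \/ (forall X, ~ (inc X l /\ inc X m)).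

Record DesarguesPlane : Prop := {
  dp_line_exists : forall A B, A <> B -> exists l, inc A l /\ inc B l;
  dp_line_unique : forall A B l m, A <> B ->
      inc A l -> inc B l -> inc A m -> inc B m -> l = m;
  dp_playfair : forall A l, ~ inc A l ->
      exists m, (inc A m /\ (forall X, ~ (inc X m /\ inc X l))) /\
        (forall m', inc A m' -> (forall X, ~ (inc X m' /\ inc X l)) -> m' = m);
  dp_noncollinear : exists A B C : Pt,
      ~ (exists l, inc A l /\ inc B l /\ inc C l);
  dp_desargues : forall (A B C A' B' C' : Pt) (a b c : Ln),
      A <> A' -> B <> B' -> C <> C' ->
      inc A a -> inc A' a -> inc B b -> inc B' b -> inc C c -> inc C' c ->
      a <> b -> b <> c -> a <> c ->
      ((par a b /\ par b c /\ par a c) \/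
       (exists Z, inc Z a /\ inc Z b /\ inc Z c)) ->
      forall lAB lA'B' lBC lB'C' lAC lA'C' : Ln,
      A <> B -> A' <> B' -> B <> C -> B' <> C' -> A <> C -> A' <> C' ->
      inc A lAB -> inc B lAB -> inc A' lA'B' -> inc B' lA'B' ->
      inc B lBC -> inc C lBC -> inc B' lB'C' -> inc C' lB'C' ->
      inc A lAC -> inc C lAC -> inc A' lA'C' -> inc C' lA'C' ->
      par lAB lA'B' -> lAB <> lA'B' -> par lBC lB'C' -> lBC <> lB'C' ->
      par lAC lA'C'
}.

Definition pick (d : Pt) (Q : Pt -> Prop) : Pt :=
  match excluded_middle_informative (exists x, Q x) with
  | left h => proj1_sig (constructive_indefinite_description _ h)
  | right _ => d
  end.

(* Addition construction on line l with zero O: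
   choose B1 not on l; P1 = (line through B1 parallel to l) /\
   (line through A parallel to O B1); A+B = l /\ (line through P1
   parallel to B B1). *)
Definition is_sum (l : Ln) (O A B X : Pt) : Prop :=
  exists B1 P1 : Pt, ~ inc B1 l /\
    (exists m, inc B1 m /\ par m l /\ inc P1 m) /\
    (exists n m, inc O n /\ inc B1 n /\ inc A m /\ par m n /\ inc P1 m) /\
    (exists n m, inc B n /\ inc B1 n /\ inc P1 m /\ par m n /\ inc X m) /\
    inc X l.

(* Multiplication construction on line l with zero O and unit I:
   choose B1 not on l; P1 = (line through A parallel to I B1) /\ (O B1);
   A*B = l /\ (line through P1 parallel to B B1). *)
Definition is_prod (l : Ln) (O I A B X : Pt) : Prop :=
  exists B1 P1 : Pt, ~ inc B1 l /\
    (exists n m, inc I n /\ inc B1 n /\ inc A m /\ par m n /\ inc P1 m) /\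
    (exists n, inc O n /\ inc B1 n /\ inc P1 n) /\
    (exists n m, inc B n /\ inc B1 n /\ inc P1 m /\ par m n /\ inc X m) /\
    inc X l.

Definition sadd (l : Ln) (O A B : Pt) : Pt := pick O (is_sum l O A B).
Definition smul (l : Ln) (O I A B : Pt) : Pt := pick O (is_prod l O I A B).
Definition sopp (l : Ln) (O A : Pt) : Pt :=
  pick O (fun Y => inc Y l /\ sadd l O A Y = O).
Definition sinv (l : Ln) (O I A : Pt) : Pt :=
  pick O (fun Y => inc Y l /\ smul l O I A Y = I).
Definition ssub (l : Ln) (O A B : Pt) : Pt := sadd l O A (sopp l O B).

Definition ratio (l : Ln) (O I A B C : Pt) : Pt :=
  smul l O I (sinv l O I (ssub l O B C)) (ssub l O A C).

Definition parallel_projection (l1 l2 : Ln) (f : Pt -> Pt) : Prop :=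
  (forall A, inc A l1 -> inc (f A) l2) /\
  exists d : Ln, ~ par d l1 /\
    forall A, inc A l1 -> exists m, inc A m /\ inc (f A) m /\ par m d.

End Plane.

(* When [l1] and [l2] meet, a projection along [d] factors through the parallel to [l2]
   through their common point: a projection between lines meeting at [O] followed by one
   between parallel lines. Each of the two carries the figure defining a sum or a product on
   the source line, drawn with a well-chosen auxiliary point, to such a figure on the target
   line; wherever the figure is not carried over verbatim, Desargues' axiom supplies the
   missing parallelisms. As the sum and product do not depend on the auxiliary point (again
   by Desargues), the projection is an isomorphism of the two skew fields, so it preserves
   opposites, inverses, differences and hence ratios. *)

From Stdlib Require Import Classical ClassicalEpsilon.

Section DesarguesPlane.
Variables (Pt Ln : Type) (inc : Pt -> Ln -> Prop).
Hypothesis HA : DesarguesPlane inc.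

Local Notation "l ∥ m" := (par inc l m) (at level 70).

Lemma line_through A B : A <> B -> exists l, inc A l /\ inc B l.
Proof. apply (dp_line_exists HA). Qed.

Lemma line_unique A B l m : A <> B -> inc A l -> inc B l -> inc A m -> inc B m -> l = m.
Proof. apply (dp_line_unique HA). Qed.

Lemma meet_unique l m P Q : l <> m -> inc P l -> inc P m -> inc Q l -> inc Q m -> P = Q.
Proof. intros Hlm HPl HPm HQl HQm. apply NNPP; intro HPQ. now apply Hlm, (line_unique P Q). Qed.

Lemma neq_on_off A B l : inc A l -> ~ inc B l -> A <> B.
Proof. intros HA' HB ->; auto. Qed.

Lemma line_neq_on_off P l m : inc P l -> ~ inc P m -> l <> m.
Proof. intros Hl Hm ->; auto. Qed.

Lemma point_off l : exists P, ~ inc P l.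
Proof.
  destruct (dp_noncollinear HA) as (X & Y & Z & Hn).
  destruct (classic (inc X l)); [|eauto].
  destruct (classic (inc Y l)); [|eauto].
  destruct (classic (inc Z l)); [|eauto].
  exfalso; apply Hn; eauto.
Qed.

Lemma par_refl l : l ∥ l.
Proof. now left. Qed.

Lemma par_sym l m : l ∥ m -> m ∥ l.
Proof. intros [->|H]; [left; auto | right; intros X [H1 H2]; apply (H X); tauto]. Qed.

Lemma par_eq_of_common l m P : l ∥ m -> inc P l -> inc P m -> l = m.
Proof. intros [->|H] H1 H2; auto. exfalso; apply (H P); tauto. Qed.

Lemma par_off l m P : l ∥ m -> l <> m -> inc P l -> ~ inc P m.
Proof. intros [->|H] Hne H1 H2; auto. apply (H P); auto. Qed.

Lemma par_through P l : exists m, inc P m /\ m ∥ l.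
Proof.
  destruct (classic (inc P l)) as [H|H]; [exists l; split; auto; apply par_refl|].
  destruct (dp_playfair HA P l H) as [m [[H1 H2] _]]. exists m; split; auto. right; auto.
Qed.

Lemma par_trans l m k : l ∥ m -> m ∥ k -> l ∥ k.
Proof.
  intros [->|H1]; auto. intros [->|H2]; [right; auto|].
  destruct (classic (l = k)) as [->|Hne]; [apply par_refl|].
  right. intros X [Xl Xk].
  assert (Xm : ~ inc X m) by (intro; apply (H1 X); tauto).
  destruct (dp_playfair HA X m Xm) as [m0 [_ Hu]].
  apply Hne. transitivity m0.
  - apply Hu; [exact Xl | exact H1].
  - symmetry; apply Hu; [exact Xk | intros Y [Y1 Y2]; apply (H2 Y); tauto].
Qed.

Lemma par_through_unique P m m' l : inc P m -> inc P m' -> m ∥ l -> m' ∥ l -> m = m'.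
Proof.
  intros. apply (par_eq_of_common m m' P); auto. eapply par_trans; eauto. apply par_sym; auto.
Qed.

Lemma par_line_off m l Q P : m ∥ l -> inc Q m -> ~ inc Q l -> inc P m -> ~ inc P l.
Proof. intros. eapply par_off; eauto. eapply line_neq_on_off with (P := Q); eauto. Qed.

Lemma par_line_off_sym m l Q P : m ∥ l -> inc Q m -> ~ inc Q l -> inc P l -> ~ inc P m.
Proof. intros. eapply par_off with (l := l); eauto. apply par_sym; auto. intros ->; auto. Qed.

Lemma meet_of_not_par l m : ~ l ∥ m -> exists P, inc P l /\ inc P m.
Proof. intros H. apply NNPP; intro H'. apply H. right. intros X HX. apply H'; eauto. Qed.

Lemma not_par_of_meet l m P : l <> m -> inc P l -> inc P m -> ~ l ∥ m.
Proof. intros Hne H1 H2 Hp. apply Hne. eapply par_eq_of_common; eauto. Qed.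

Lemma not_par_compat l m l' m' : ~ l ∥ m -> l' ∥ l -> m' ∥ m -> ~ l' ∥ m'.
Proof.
  intros H H1 H2 H3. apply H. eapply par_trans; [apply par_sym; eauto|].
  eapply par_trans; eauto.
Qed.

(* In the four-point plane two parallel lines cover every point, hence the
   third point on [l]. *)
Lemma point_off_par_lines l m Z1 Y1 Y2 Y3 : l ∥ m -> l <> m -> inc Z1 m ->
  inc Y1 l -> inc Y2 l -> inc Y3 l -> Y1 <> Y2 -> Y1 <> Y3 -> Y2 <> Y3 ->
  exists D, ~ inc D l /\ ~ inc D m.
Proof.
  intros Hp Hne HZ1 H1 H2 H3 N12 N13 N23.
  assert (HZl : ~ inc Z1 l) by (apply (par_off m l Z1); auto; apply par_sym; auto).
  assert (HY1m : ~ inc Y1 m) by (apply (par_off l m Y1); auto).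
  assert (HY2m : ~ inc Y2 m) by (apply (par_off l m Y2); auto).
  assert (HY3m : ~ inc Y3 m) by (apply (par_off l m Y3); auto).
  destruct (line_through Y1 Z1) as [g [Hg1 Hg2]]; [intros ->; auto|].
  destruct (par_through Y2 g) as [g2 [Hg21 Hg22]].
  destruct (meet_of_not_par g2 m) as [Z2 [HZ21 HZ22]].
  { apply (not_par_compat g m); [apply (not_par_of_meet g m Z1)|..]; auto.
    - intros ->; auto.
    - apply par_refl. }
  assert (HZ12 : Z1 <> Z2).
  { intros <-. assert (g2 = g) by (apply (par_eq_of_common g2 g Z1); auto). subst g2.
    apply N12, (meet_unique g l); auto. intros ->; auto. }
  assert (HZ2l : ~ inc Z2 l) by (apply (par_off m l Z2); auto; apply par_sym; auto).
  destruct (line_through Y2 Z1) as [h2 [Hh21 Hh22]]; [intros ->; auto|].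
  destruct (line_through Y3 Z1) as [h3 [Hh31 Hh32]]; [intros ->; auto|].
  destruct (line_through Y1 Z2) as [e [He1 He2]]; [intros ->; auto|].
  assert (Hel : e <> l) by (intros ->; auto).
  assert (Hem : e <> m) by (intros ->; auto).
  (* [D] is where [Y2 Z1] or [Y3 Z1] meets [Y1 Z2]; they cannot both be parallel to it. *)
  assert (Hh : exists h Y, inc Y h /\ inc Z1 h /\ inc Y l /\ Y <> Y1 /\ ~ h ∥ e).
  { destruct (classic (h2 ∥ e)) as [P2|P2]; [|exists h2, Y2; auto].
    destruct (classic (h3 ∥ e)) as [P3|P3]; [|exists h3, Y3; auto].
    exfalso. assert (h2 = h3) by (apply (par_through_unique Z1 h2 h3 e); auto). subst h3.
    apply N23, (meet_unique h2 l); auto. intros ->; auto. }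
  destruct Hh as (h & Y & HYh & HZh & HYl & HYY1 & Hhe).
  destruct (meet_of_not_par h e Hhe) as [D [HDh HDe]]. exists D; split; intro.
  - apply HYY1. transitivity D.
    + symmetry; apply (meet_unique h l); auto. intros ->; auto.
    + apply (meet_unique e l); auto.
  - apply HZ12. transitivity D.
    + symmetry; apply (meet_unique h m); auto. intros ->. apply (par_off l m Y); auto.
    + apply (meet_unique e m); auto.
Qed.

Lemma point_off_meeting_lines l n O P Q : l <> n -> inc O l -> inc O n ->
  inc P l -> P <> O -> inc Q n -> Q <> O -> exists R, ~ inc R l /\ ~ inc R n.
Proof.
  intros Hne HOl HOn HP HPO HQ HQO.
  assert (Hln : ~ l ∥ n) by (apply (not_par_of_meet l n O); auto).
  destruct (par_through P n) as [p [Hp1 Hp2]].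
  destruct (par_through Q l) as [q [Hq1 Hq2]].
  destruct (meet_of_not_par p q) as [R [HR1 HR2]].
  { intro H. apply Hln. eapply par_trans; [apply par_sym; eauto|].
    eapply par_trans; [apply par_sym; eauto|auto]. }
  exists R; split; intro HR.
  - assert (p <> l) by (intros ->; apply Hne, (par_eq_of_common l n O); auto).
    assert (R = P) by (apply (meet_unique p l); auto). subst R.
    assert (q = l) by (apply (par_eq_of_common q l P); auto). subst q.
    apply HQO, (meet_unique l n); auto.
  - assert (q <> n) by (intros ->; apply Hne; symmetry; apply (par_eq_of_common n l O); auto).
    assert (R = Q) by (apply (meet_unique q n); auto). subst R.
    assert (p = n) by (apply (par_eq_of_common p n Q); auto). subst p.
    apply HPO, (meet_unique l n); auto.
Qed.

Lemma desargues A B C A' B' C' a b c lAB lA'B' lBC lB'C' lAC lA'C' :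
  A <> A' -> B <> B' -> C <> C' ->
  inc A a -> inc A' a -> inc B b -> inc B' b -> inc C c -> inc C' c ->
  a <> b -> b <> c -> a <> c ->
  (a ∥ b /\ b ∥ c /\ a ∥ c \/ exists Z, inc Z a /\ inc Z b /\ inc Z c) ->
  A <> B -> A' <> B' -> B <> C -> B' <> C' -> A <> C -> A' <> C' ->
  inc A lAB -> inc B lAB -> inc A' lA'B' -> inc B' lA'B' ->
  inc B lBC -> inc C lBC -> inc B' lB'C' -> inc C' lB'C' ->
  inc A lAC -> inc C lAC -> inc A' lA'C' -> inc C' lA'C' ->
  lAB ∥ lA'B' -> lAB <> lA'B' -> lBC ∥ lB'C' -> lBC <> lB'C' ->
  lAC ∥ lA'C'.
Proof.
  intros H1 H2 H3 H4 H5 H6 H7 H8 H9 H10 H11 H12 H13 H14 H15 H16 H17 H18 H19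
    H20 H21 H22 H23 H24 H25 H26 H27 H28 H29 H30 H31 H32 H33 H34 H35.
  exact (@dp_desargues Pt Ln inc HA A B C A' B' C' a b c H1 H2 H3 H4 H5 H6 H7 H8 H9
    H10 H11 H12 H13 lAB lA'B' lBC lB'C' lAC lA'C' H14 H15 H16 H17 H18 H19 H20 H21 H22
    H23 H24 H25 H26 H27 H28 H29 H30 H31 H32 H33 H34 H35).
Qed.


Ltac destruct_sum_config H :=
  destruct H as (?HB1 & ?Hm & ?Hml & ?HPm & ?HOn & ?HBn & ?HAk & ?Hkn & ?HPk & ?HBn2 & ?HB1n2 &
    ?HPk2 & ?Hk2 & ?HXk2 & ?HXl).

Section Addition.
Variables (l : Ln) (O : Pt).
Hypothesis HOl : inc O l.

Definition sum_config A B B1 P1 X m n k n2 k2 : Prop :=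
  ~ inc B1 l /\ inc B1 m /\ m ∥ l /\ inc P1 m /\
  inc O n /\ inc B1 n /\ inc A k /\ k ∥ n /\ inc P1 k /\
  inc B n2 /\ inc B1 n2 /\ inc P1 k2 /\ k2 ∥ n2 /\ inc X k2 /\ inc X l.

Lemma is_sum_config A B X :
  is_sum inc l O A B X <-> exists B1 P1 m n k n2 k2, sum_config A B B1 P1 X m n k n2 k2.
Proof.
  unfold sum_config, is_sum; split.
  - intros (B1 & P1 & H1 & (m & ? & ? & ?) & (n & k & ? & ? & ? & ? & ?) &
            (n2 & k2 & ? & ? & ? & ? & ?) & ?).
    exists B1, P1, m, n, k, n2, k2; tauto.
  - intros (B1 & P1 & m & n & k & n2 & k2 & H).
    exists B1, P1; intuition eauto 10.
Qed.

Lemma sum_config_inc A B B1 P1 X m n k n2 k2 :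
  sum_config A B B1 P1 X m n k n2 k2 -> inc X l.
Proof. intros S; destruct_sum_config S; auto. Qed.

Lemma sum_config_exists A B B1 : inc A l -> inc B l -> ~ inc B1 l ->
  exists P1 X m n k n2 k2, sum_config A B B1 P1 X m n k n2 k2.
Proof.
  intros HAl HBl HB1.
  destruct (par_through B1 l) as [m [Hm Hml]].
  destruct (line_through O B1) as [n [HOn HBn]]; [eapply neq_on_off with (l := l); eauto|].
  destruct (par_through A n) as [k [HAk Hkn]].
  assert (Hnl : ~ n ∥ l).
  { apply (not_par_of_meet n l O); auto. eapply line_neq_on_off with (P := B1); eauto. }
  destruct (meet_of_not_par k m) as [P1 [HPk HPm]]; [apply (not_par_compat n l k m); auto|].
  destruct (line_through B B1) as [n2 [HBn2 HB1n2]]; [eapply neq_on_off with (l := l); eauto|].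
  destruct (par_through P1 n2) as [k2 [HPk2 Hk2]].
  destruct (meet_of_not_par k2 l) as [X [HXk2 HXl]].
  { apply (not_par_compat n2 l k2 l); [| exact Hk2 | apply par_refl].
    apply (not_par_of_meet n2 l B); auto. eapply line_neq_on_off with (P := B1); eauto. }
  exists P1, X, m, n, k, n2, k2; unfold sum_config; tauto.
Qed.

Lemma sum_config_P1_B1 A B B1 P1 X m n k n2 k2 : inc A l ->
  sum_config A B B1 P1 X m n k n2 k2 -> P1 = B1 -> A = O.
Proof.
  intros HAl S ->; destruct_sum_config S.
  assert (k = n) by (eapply par_eq_of_common with (P := B1); eauto). subst k.
  eapply meet_unique with (l := n) (m := l); eauto. eapply line_neq_on_off with (P := B1); eauto.
Qed.

Lemma sum_config_0l A B B1 P1 X m n k n2 k2 : inc B l ->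
  sum_config A B B1 P1 X m n k n2 k2 -> A = O -> X = B.
Proof.
  intros HBl S ->; destruct_sum_config S.
  assert (k = n) by (eapply par_eq_of_common with (P := O); eauto). subst k.
  assert (HOm : ~ inc O m) by (apply (par_line_off_sym m l B1 O); auto).
  assert (P1 = B1).
  { eapply meet_unique with (l := n) (m := m); eauto. eapply line_neq_on_off with (P := O); eauto. }
  subst P1.
  assert (k2 = n2) by (eapply par_eq_of_common with (P := B1); eauto). subst k2.
  eapply meet_unique with (l := n2) (m := l); eauto. eapply line_neq_on_off with (P := B1); eauto.
Qed.

Lemma sum_config_0r A B B1 P1 X m n k n2 k2 : inc A l ->
  sum_config A B B1 P1 X m n k n2 k2 -> B = O -> X = A.
Proof.
  intros HAl S ->; destruct_sum_config S.
  assert (HOB1 : O <> B1) by (eapply neq_on_off with (l := l); eauto).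
  assert (n2 = n) by (eapply line_unique with (A := O) (B := B1); eauto). subst n2.
  assert (k2 = k) by (eapply par_through_unique with (P := P1); eauto). subst k2.
  assert (k <> l).
  { intros ->. apply HB1. assert (l = n) by (eapply par_eq_of_common with (P := O); eauto).
    subst; auto. }
  eapply meet_unique with (l := k) (m := l); eauto.
Qed.

Lemma sum_config_nondeg A B B1 P1 X m n k n2 k2 : inc A l -> inc B l -> A <> O ->
  sum_config A B B1 P1 X m n k n2 k2 ->
  P1 <> B1 /\ X <> B /\ ~ inc P1 l /\ m <> l /\ ~ inc A n.
Proof.
  intros HAl HBl HAO S.
  assert (HP1B1 : P1 <> B1) by (intro; apply HAO; eapply sum_config_P1_B1; eauto).
  destruct_sum_config S.
  assert (Hm1l : m <> l) by (eapply line_neq_on_off with (P := B1); eauto).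
  repeat split; auto.
  - intros ->. apply HP1B1.
    assert (k2 = n2) by (eapply par_eq_of_common with (P := B); eauto). subst k2.
    eapply meet_unique with (l := n2) (m := m); eauto.
    eapply line_neq_on_off with (P := B); eauto. apply (par_line_off_sym m l B1 B); auto.
  - apply (par_line_off m l B1 P1); auto.
  - intro. apply HAO. eapply meet_unique with (l := n) (m := l); eauto.
    eapply line_neq_on_off with (P := B1); eauto.
Qed.

(* Desargues for [B1 O C1], [P1 A Q1], then for [B B1 C1], [X P1 Q1], each pair in
   perspective along the parallels [m1], [l], [m2]. *)
Lemma sum_config_indep_off A B B1 P1 X m1 n1 k1 n1' k1' C1 Q1 Y m2 n2 k2 n2' k2' :
  inc A l -> inc B l -> A <> O ->
  sum_config A B B1 P1 X m1 n1 k1 n1' k1' -> sum_config A B C1 Q1 Y m2 n2 k2 n2' k2' ->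
  ~ inc C1 m1 -> X = Y.
Proof.
  intros HAl HBl HAO S1 S2 HC1.
  destruct (sum_config_nondeg A B B1 P1 X m1 n1 k1 n1' k1') as (HBP & HXB & HP1l & Hm1l & HAn1);
    auto.
  destruct (sum_config_nondeg A B C1 Q1 Y m2 n2 k2 n2' k2') as (HCQ & _ & HQ1l & Hm2l & HAn2);
    auto.
  destruct_sum_config S1. destruct_sum_config S2.
  assert (Hm12 : m1 <> m2) by (intros ->; auto).
  assert (Hpm12 : m1 ∥ m2) by (eapply par_trans; eauto; apply par_sym; auto).
  assert (HBC : B1 <> C1) by (intros ->; auto).
  assert (HPQ : P1 <> Q1).
  { intros <-. apply HC1. assert (m1 = m2) by (eapply par_eq_of_common with (P := P1); eauto).
    subst; auto. }
  destruct (line_through B1 C1 HBC) as [g [Hg1 Hg2]].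
  destruct (line_through P1 Q1 HPQ) as [g' [Hg1' Hg2']].
  assert (Hgg : g ∥ g').
  { apply (desargues B1 O C1 P1 A Q1 m1 l m2 n1 k1 n2 k2 g g'); auto.
    all: try (eapply neq_on_off with (l := l); eauto; fail).
    all: try (apply not_eq_sym; eapply neq_on_off with (l := l); eauto; fail).
    all: try (apply par_sym; auto; fail).
    - left; split; [|split]; auto. apply par_sym; auto.
    - intros ->; auto.
    - intros ->; auto. }
  assert (HBC1 : B <> C1) by (eapply neq_on_off with (l := l); eauto).
  assert (HXQ : X <> Q1) by (eapply neq_on_off with (l := l); eauto).
  destruct (line_through B C1 HBC1) as [h [Hh1 Hh2]].
  destruct (line_through X Q1 HXQ) as [h' [Hh1' Hh2']].
  assert (Hhh : h ∥ h').
  { apply (desargues B B1 C1 X P1 Q1 l m1 m2 n1' k1' g g' h h'); auto.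
    all: try (eapply neq_on_off with (l := l); eauto; fail).
    all: try (apply par_sym; auto; fail).
    - left; split; [|split]; auto. apply par_sym; auto. eapply par_trans; eauto.
      apply par_sym; auto.
    - intros <-. apply HBP. eapply meet_unique with (l := n1') (m := m1); eauto.
      eapply line_neq_on_off with (P := B); eauto.
      eapply par_line_off_sym with (Q := B1) (l := l); eauto.
    - intros <-. apply HC1.
      assert (g = m1) by (eapply line_unique with (A := B1) (B := P1); eauto). subst; auto. }
  assert (n2' = h) by (eapply line_unique with (A := B) (B := C1); eauto). subst n2'.
  assert (k2' = h') by (apply (par_through_unique Q1 k2' h' h); auto; apply par_sym; auto).
  subst k2'.
  eapply meet_unique with (l := h') (m := l); eauto. eapply line_neq_on_off with (P := Q1); eauto.
Qed.

Lemma sum_config_unique A B B1 P1 X m1 n1 k1 n1' k1' C1 Q1 Y m2 n2 k2 n2' k2' :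
  inc A l -> inc B l ->
  sum_config A B B1 P1 X m1 n1 k1 n1' k1' -> sum_config A B C1 Q1 Y m2 n2 k2 n2' k2' -> X = Y.
Proof.
  intros HAl HBl S1 S2.
  destruct (classic (A = O)) as [HAO|HAO].
  { transitivity B; [|symmetry]; eapply sum_config_0l; eauto. }
  destruct (classic (inc C1 m1)) as [HC|HC];
    [|apply (sum_config_indep_off A B B1 P1 X m1 n1 k1 n1' k1' C1 Q1 Y m2 n2 k2 n2' k2'); auto].
  assert (HB1m : inc B1 m1) by apply S1.
  assert (Hm1l : m1 ∥ l) by apply S1.
  assert (HB1l : ~ inc B1 l) by apply S1.
  assert (Hm1l' : m1 <> l) by (eapply line_neq_on_off; eauto).
  assert (m2 = m1) by (apply (par_through_unique C1 m2 m1 l); apply S2 || auto). subst m2.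
  (* Compare both figures with a third one whose auxiliary point is off [m1]. *)
  destruct (classic (exists D, ~ inc D l /\ ~ inc D m1)) as [[D [HDl HDm]]|ND].
  - destruct (sum_config_exists A B D) as (R1 & Z & m3 & n3 & k3 & n3' & k3' & S3); auto.
    transitivity Z; [|symmetry].
    + apply (sum_config_indep_off A B B1 P1 X m1 n1 k1 n1' k1' D R1 Z m3 n3 k3 n3' k3'); auto.
    + apply (sum_config_indep_off A B C1 Q1 Y m1 n2 k2 n2' k2' D R1 Z m3 n3 k3 n3' k3'); auto.
  - (* A plane with no third point on [l] has order 2, where [A + B] is forced. *)
    assert (Hthird : forall Z, inc Z l -> Z = O \/ Z = A).
    { intros Z HZ. apply NNPP; intro HZ'. apply ND.
      apply (point_off_par_lines l m1 B1 O A Z); auto; [apply par_sym; auto|..]; intuition. }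
    destruct (Hthird B HBl) as [HBO|HBA].
    + transitivity A; [|symmetry]; eapply sum_config_0r; eauto.
    + rewrite HBA in S1, S2.
      destruct (sum_config_nondeg A A B1 P1 X m1 n1 k1 n1' k1') as (_ & HXA & _); auto.
      destruct (sum_config_nondeg A A C1 Q1 Y m1 n2 k2 n2' k2') as (_ & HYA & _); auto.
      destruct (Hthird X (sum_config_inc _ _ _ _ _ _ _ _ _ _ S1)) as [->|]; [|contradiction].
      destruct (Hthird Y (sum_config_inc _ _ _ _ _ _ _ _ _ _ S2)) as [->|]; [auto|contradiction].
Qed.

Lemma is_sum_inc A B X : is_sum inc l O A B X -> inc X l.
Proof. intros (? & ? & _ & _ & _ & _ & H); exact H. Qed.

Lemma is_sum_exists A B : inc A l -> inc B l -> exists X, is_sum inc l O A B X.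
Proof.
  intros HAl HBl. destruct (point_off l) as [B1 HB1].
  destruct (sum_config_exists A B B1) as (P1 & X & S); auto.
  exists X. apply is_sum_config. eauto.
Qed.

Lemma is_sum_unique A B X Y : inc A l -> inc B l ->
  is_sum inc l O A B X -> is_sum inc l O A B Y -> X = Y.
Proof.
  intros HAl HBl (B1 & P1 & m & n & k & n2 & k2 & S1)%is_sum_config
    (C1 & Q1 & m' & n' & k' & n2' & k2' & S2)%is_sum_config.
  apply (sum_config_unique A B B1 P1 X m n k n2 k2 C1 Q1 Y m' n' k' n2' k2'); auto.
Qed.

Lemma is_sum_config_with A B X B1 : inc A l -> inc B l -> ~ inc B1 l ->
  is_sum inc l O A B X -> exists P1 m n k n2 k2, sum_config A B B1 P1 X m n k n2 k2.
Proof.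
  intros HAl HBl HB1 HS.
  destruct (sum_config_exists A B B1) as (P1 & Y & m & n & k & n2 & k2 & S); auto.
  replace X with Y; [eauto 7|].
  apply (is_sum_unique A B); auto. apply is_sum_config. eauto 8.
Qed.

Lemma is_sum_0l B X : inc B l -> is_sum inc l O O B X -> X = B.
Proof.
  intros HBl (B1 & P1 & m & n & k & n2 & k2 & S)%is_sum_config.
  apply (sum_config_0l O B B1 P1 X m n k n2 k2); auto.
Qed.

Lemma is_sum_0r A X : inc A l -> is_sum inc l O A O X -> X = A.
Proof.
  intros HAl (B1 & P1 & m & n & k & n2 & k2 & S)%is_sum_config.
  apply (sum_config_0r A O B1 P1 X m n k n2 k2); auto.
Qed.

Lemma is_sum_0l_self B : inc B l -> is_sum inc l O O B B.
Proof.
  intros HBl. destruct (is_sum_exists O B) as [X HX]; auto.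
  enough (X = B) by (subst X; exact HX). apply (is_sum_0l B); auto.
Qed.

Lemma is_sum_0r_self A : inc A l -> is_sum inc l O A O A.
Proof.
  intros HAl. destruct (is_sum_exists A O) as [X HX]; auto.
  enough (X = A) by (subst X; exact HX). apply (is_sum_0r A); auto.
Qed.

Lemma sum_config_inj A B B' B1 P1 P1' X m n k n2 k2 m' n' k' n2' k2' : inc B l -> inc B' l ->
  sum_config A B B1 P1 X m n k n2 k2 -> sum_config A B' B1 P1' X m' n' k' n2' k2' -> B = B'.
Proof.
  intros HBl HB'l S S'. destruct_sum_config S.
  destruct S' as (_ & Hm' & Hml' & HPm' & HOn' & HBn' & HAk' & Hkn' & HPk' & HBn2' & HB1n2' &
    HPk2' & Hk2' & HXk2' & _).
  assert (m' = m) by (apply (par_through_unique B1 m' m l); auto). subst m'.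
  assert (HOB1 : O <> B1) by (eapply neq_on_off with (l := l); eauto).
  assert (n' = n) by (apply (line_unique O B1); auto). subst n'.
  assert (k' = k) by (apply (par_through_unique A k' k n); auto). subst k'.
  assert (Hnl : ~ n ∥ l) by (apply (not_par_of_meet n l O); auto; intros ->; auto).
  assert (Hmk : m <> k) by (intros <-; apply Hnl; eapply par_trans; [apply par_sym|]; eauto).
  assert (P1' = P1) by (apply (meet_unique m k); auto). subst P1'.
  assert (HP1X : P1 <> X)
    by (apply not_eq_sym; eapply neq_on_off; [|apply (par_line_off m l B1)]; eauto).
  assert (k2' = k2) by (apply (line_unique P1 X); auto). subst k2'.
  assert (n2' = n2) by (apply (par_through_unique B1 n2' n2 k2); auto; apply par_sym; auto).
  subst n2'.
  apply (meet_unique n2 l); auto. intros ->; auto.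
Qed.

Lemma is_sum_inj_r A B B' X : inc A l -> inc B l -> inc B' l ->
  is_sum inc l O A B X -> is_sum inc l O A B' X -> B = B'.
Proof.
  intros HAl HBl HB'l (B1 & P1 & m & n & k & n2 & k2 & S)%is_sum_config HS'.
  assert (HB1 : ~ inc B1 l) by apply S.
  destruct (is_sum_config_with A B' X B1) as (P1' & m' & n' & k' & n2' & k2' & S'); auto.
  apply (sum_config_inj A B B' B1 P1 P1' X m n k n2 k2 m' n' k' n2' k2'); auto.
Qed.

End Addition.

Ltac destruct_prod_config H :=
  destruct H as (?HB1 & ?HIn & ?HBnI & ?HAk & ?Hkn & ?HPk & ?HOn & ?HBn & ?HPn & ?HBnB & ?HB1nB &
    ?HPk2 & ?Hk2 & ?HXk2 & ?HXl).

Section Multiplication.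
Variables (l : Ln) (O I : Pt).
Hypotheses (HOl : inc O l) (HIl : inc I l) (HOI : O <> I).

Definition prod_config A B B1 P1 X nI k n nB k2 : Prop :=
  ~ inc B1 l /\ inc I nI /\ inc B1 nI /\ inc A k /\ k ∥ nI /\ inc P1 k /\
  inc O n /\ inc B1 n /\ inc P1 n /\
  inc B nB /\ inc B1 nB /\ inc P1 k2 /\ k2 ∥ nB /\ inc X k2 /\ inc X l.

Lemma is_prod_config A B X :
  is_prod inc l O I A B X <-> exists B1 P1 nI k n nB k2, prod_config A B B1 P1 X nI k n nB k2.
Proof.
  unfold prod_config, is_prod; split.
  - intros (B1 & P1 & H1 & (nI & k & ? & ? & ? & ? & ?) & (n & ? & ? & ?) &
            (nB & k2 & ? & ? & ? & ? & ?) & ?).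
    exists B1, P1, nI, k, n, nB, k2; tauto.
  - intros (B1 & P1 & nI & k & n & nB & k2 & H).
    exists B1, P1; intuition eauto 10.
Qed.

Lemma prod_config_lines A B B1 P1 X nI k n nB k2 : prod_config A B B1 P1 X nI k n nB k2 ->
  n <> l /\ nI <> l /\ n <> nI /\ ~ n ∥ nI.
Proof.
  intros S; destruct_prod_config S.
  assert (n <> l) by (intros ->; auto).
  assert (nI <> l) by (intros ->; auto).
  assert (n <> nI) by (intros <-; apply HOI, (meet_unique n l); auto).
  repeat split; auto. apply (not_par_of_meet n nI B1); auto.
Qed.

Lemma prod_config_exists A B B1 : inc A l -> inc B l -> ~ inc B1 l ->
  exists P1 X nI k n nB k2, prod_config A B B1 P1 X nI k n nB k2.
Proof.
  intros HAl HBl HB1.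
  destruct (line_through O B1) as [n [HOn HBn]]; [intros ->; auto|].
  destruct (line_through I B1) as [nI [HIn HBnI]]; [intros ->; auto|].
  assert (n <> nI) by (intros <-; apply HOI, (meet_unique n l); auto; intros ->; auto).
  destruct (par_through A nI) as [k [HAk Hkn]].
  destruct (meet_of_not_par k n) as [P1 [HPk HPn]].
  { apply (not_par_compat nI n k n); auto; [|apply par_refl].
    apply (not_par_of_meet nI n B1); auto. }
  destruct (line_through B B1) as [nB [HBnB HB1nB]]; [intros ->; auto|].
  destruct (par_through P1 nB) as [k2 [HPk2 Hk2]].
  destruct (meet_of_not_par k2 l) as [X [HXk2 HXl]].
  { apply (not_par_compat nB l k2 l); auto; [|apply par_refl].
    apply (not_par_of_meet nB l B); auto. intros ->; auto. }
  exists P1, X, nI, k, n, nB, k2; unfold prod_config; tauto.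
Qed.

Lemma prod_config_0l A B B1 P1 X nI k n nB k2 : inc B l ->
  prod_config A B B1 P1 X nI k n nB k2 -> A = O -> X = O.
Proof.
  intros HBl S ->. destruct (prod_config_lines _ _ _ _ _ _ _ _ _ _ S) as (H1 & _ & H3 & H4).
  destruct_prod_config S.
  assert (k <> n) by (intros ->; auto).
  assert (P1 = O) by (apply (meet_unique k n); auto). subst P1.
  assert (k2 <> l).
  { intros ->. apply HB1. assert (l = nB) by (apply (par_eq_of_common l nB B); auto).
    subst; auto. }
  apply (meet_unique k2 l); auto.
Qed.

Lemma prod_config_0r A B B1 P1 X nI k n nB k2 :
  prod_config A B B1 P1 X nI k n nB k2 -> B = O -> X = O.
Proof.
  intros S ->. destruct (prod_config_lines _ _ _ _ _ _ _ _ _ _ S) as (H1 & _).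
  destruct_prod_config S.
  assert (nB = n) by (apply (line_unique O B1); auto; intros ->; auto). subst nB.
  assert (k2 = n) by (apply (par_eq_of_common k2 n P1); auto). subst k2.
  apply (meet_unique n l); auto.
Qed.

Lemma prod_config_1l A B B1 P1 X nI k n nB k2 : inc B l ->
  prod_config A B B1 P1 X nI k n nB k2 -> A = I -> X = B.
Proof.
  intros HBl S ->. destruct (prod_config_lines _ _ _ _ _ _ _ _ _ _ S) as (_ & _ & H3 & _).
  destruct_prod_config S.
  assert (k = nI) by (apply (par_eq_of_common k nI I); auto). subst k.
  assert (P1 = B1) by (apply (meet_unique nI n); auto). subst P1.
  assert (k2 = nB) by (apply (par_eq_of_common k2 nB B1); auto). subst k2.
  apply (meet_unique nB l); auto. intros ->; auto.
Qed.

Lemma prod_config_P1_B1 A B B1 P1 X nI k n nB k2 : inc A l ->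
  prod_config A B B1 P1 X nI k n nB k2 -> P1 = B1 -> A = I.
Proof.
  intros HAl S ->. destruct (prod_config_lines _ _ _ _ _ _ _ _ _ _ S) as (_ & H2 & _).
  destruct_prod_config S.
  assert (k = nI) by (apply (par_eq_of_common k nI B1); auto). subst k.
  apply (meet_unique nI l); auto.
Qed.

Lemma prod_config_P1_O A B B1 P1 X nI k n nB k2 : inc A l ->
  prod_config A B B1 P1 X nI k n nB k2 -> P1 = O -> A = O.
Proof.
  intros HAl S ->. destruct_prod_config S. apply NNPP; intro HAO.
  assert (k = l) by (apply (line_unique A O); auto). subst k.
  apply HB1. assert (l = nI) by (apply (par_eq_of_common l nI I); auto). subst; auto.
Qed.

Lemma prod_config_eq0 A B B1 P1 X nI k n nB k2 : inc A l -> inc B l ->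
  prod_config A B B1 P1 X nI k n nB k2 -> X = O -> A = O \/ B = O.
Proof.
  intros HAl HBl S ->.
  destruct (classic (P1 = O)) as [E|E]; [left; eapply prod_config_P1_O; eauto|right].
  destruct (prod_config_lines _ _ _ _ _ _ _ _ _ _ S) as (H1 & _).
  destruct_prod_config S.
  assert (k2 = n) by (apply (line_unique P1 O); auto). subst k2.
  assert (n = nB) by (apply (par_eq_of_common n nB B1); auto). subst nB.
  apply (meet_unique n l); auto.
Qed.

Lemma prod_config_nondeg A B B1 P1 X nI k n nB k2 : inc A l -> inc B l ->
  A <> O -> A <> I -> B <> O -> prod_config A B B1 P1 X nI k n nB k2 ->
  P1 <> B1 /\ P1 <> O /\ X <> B /\ ~ inc P1 l /\ ~ inc A nI.
Proof.
  intros HAl HBl HAO HAI HBO S.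
  assert (HP1B1 : P1 <> B1) by (intro; apply HAI; eapply prod_config_P1_B1; eauto).
  assert (HP1O : P1 <> O) by (intro; apply HAO; eapply prod_config_P1_O; eauto).
  destruct (prod_config_lines _ _ _ _ _ _ _ _ _ _ S) as (H1 & H2 & H3 & H4).
  destruct_prod_config S.
  repeat split; auto.
  - intros ->. apply HP1B1.
    assert (k2 = nB) by (apply (par_eq_of_common k2 nB B); auto). subst k2.
    apply (meet_unique nB n); auto.
    intros ->. apply HBO, (meet_unique n l); auto.
  - intro. apply HP1O, (meet_unique n l); auto.
  - intro. apply HAI, (meet_unique nI l); auto.
Qed.

(* Desargues for [B1 I C1], [P1 A Q1], then for [B B1 C1], [X P1 Q1], both centred at [O]. *)
Lemma prod_config_indep_off A B B1 P1 X nI1 k1 n1 nB1 k21 C1 Q1 Y nI2 k2 n2 nB2 k22 :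
  inc A l -> inc B l -> A <> O -> A <> I -> B <> O ->
  prod_config A B B1 P1 X nI1 k1 n1 nB1 k21 -> prod_config A B C1 Q1 Y nI2 k2 n2 nB2 k22 ->
  ~ inc C1 n1 -> X = Y.
Proof.
  intros HAl HBl HAO HAI HBO S1 S2 HC1.
  destruct (prod_config_nondeg A B B1 P1 X nI1 k1 n1 nB1 k21) as (HBP & HPO & HXB & HP1l & HAnI1);
    auto.
  destruct (prod_config_nondeg A B C1 Q1 Y nI2 k2 n2 nB2 k22) as (HCQ & HQO & _ & HQ1l & HAnI2);
    auto.
  destruct (prod_config_lines _ _ _ _ _ _ _ _ _ _ S1) as (G1 & _).
  destruct (prod_config_lines _ _ _ _ _ _ _ _ _ _ S2) as (G1' & _).
  destruct_prod_config S1. destruct_prod_config S2.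
  assert (Hn12 : n1 <> n2) by (intros ->; auto).
  assert (HBC : B1 <> C1) by (intros ->; auto).
  assert (HPQ : P1 <> Q1) by (intros <-; apply HPO, (meet_unique n1 n2); auto).
  destruct (line_through B1 C1 HBC) as [g [Hg1 Hg2]].
  destruct (line_through P1 Q1 HPQ) as [g' [Hg1' Hg2']].
  assert (Hgg : g ∥ g').
  { apply (desargues B1 I C1 P1 A Q1 n1 l n2 nI1 k1 nI2 k2 g g'); auto.
    all: try (intros ->; auto; fail).
    all: try (apply par_sym; auto; fail).
    right; exists O; auto. }
  assert (HBC1 : B <> C1) by (intros ->; auto).
  assert (HXQ : X <> Q1) by (intros ->; auto).
  destruct (line_through B C1 HBC1) as [h [Hh1 Hh2]].
  destruct (line_through X Q1 HXQ) as [h' [Hh1' Hh2']].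
  assert (HBn1 : ~ inc B n1) by (intro; apply HBO, (meet_unique n1 l); auto).
  assert (Hhh : h ∥ h').
  { apply (desargues B B1 C1 X P1 Q1 l n1 n2 nB1 k21 g g' h h'); auto.
    all: try (intros ->; auto; fail).
    all: try (apply par_sym; auto; fail).
    - right; exists O; auto.
    - intros <-. apply HBP, (meet_unique nB1 n1); auto. intros ->; auto.
    - intros <-. apply HC1.
      assert (g = n1) by (apply (line_unique B1 P1); auto). subst; auto. }
  assert (nB2 = h) by (apply (line_unique B C1); auto). subst nB2.
  assert (k22 = h') by (apply (par_through_unique Q1 k22 h' h); auto; apply par_sym; auto).
  subst k22.
  apply (meet_unique h' l); auto. intros ->; auto.
Qed.

Lemma prod_config_unique A B B1 P1 X nI1 k1 n1 nB1 k21 C1 Q1 Y nI2 k2 n2 nB2 k22 :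
  inc A l -> inc B l ->
  prod_config A B B1 P1 X nI1 k1 n1 nB1 k21 -> prod_config A B C1 Q1 Y nI2 k2 n2 nB2 k22 -> X = Y.
Proof.
  intros HAl HBl S1 S2.
  destruct (classic (A = O)) as [E|HAO].
  { transitivity O; [|symmetry]; eapply prod_config_0l; eauto. }
  destruct (classic (B = O)) as [E|HBO].
  { transitivity O; [|symmetry]; eapply prod_config_0r; eauto. }
  destruct (classic (A = I)) as [E|HAI].
  { transitivity B; [|symmetry]; eapply prod_config_1l; eauto. }
  destruct (classic (inc C1 n1)) as [HC|HC];
    [|apply (prod_config_indep_off A B B1 P1 X nI1 k1 n1 nB1 k21 C1 Q1 Y nI2 k2 n2 nB2 k22); auto].
  destruct (prod_config_lines _ _ _ _ _ _ _ _ _ _ S1) as (G1 & _).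
  assert (HB1n : inc B1 n1) by apply S1.
  assert (HOn : inc O n1) by apply S1.
  assert (HB1l : ~ inc B1 l) by apply S1.
  assert (HC1l : ~ inc C1 l) by apply S2.
  assert (n2 = n1) by (apply (line_unique O C1); [intros ->; auto|apply S2..|auto|auto]).
  subst n2.
  destruct (point_off_meeting_lines l n1 O I B1) as [D [HDl HDn]]; auto; [intros ->; auto|].
  destruct (prod_config_exists A B D) as (R1 & Z & nI3 & k3 & n3 & nB3 & k23 & S3); auto.
  transitivity Z; [|symmetry].
  - apply (prod_config_indep_off A B B1 P1 X nI1 k1 n1 nB1 k21 D R1 Z nI3 k3 n3 nB3 k23); auto.
  - apply (prod_config_indep_off A B C1 Q1 Y nI2 k2 n1 nB2 k22 D R1 Z nI3 k3 n3 nB3 k23); auto.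
Qed.

Lemma is_prod_inc A B X : is_prod inc l O I A B X -> inc X l.
Proof. intros (? & ? & _ & _ & _ & _ & H); exact H. Qed.

Lemma is_prod_exists A B : inc A l -> inc B l -> exists X, is_prod inc l O I A B X.
Proof.
  intros HAl HBl. destruct (point_off l) as [B1 HB1].
  destruct (prod_config_exists A B B1) as (P1 & X & S); auto.
  exists X. apply is_prod_config. eauto.
Qed.

Lemma is_prod_unique A B X Y : inc A l -> inc B l ->
  is_prod inc l O I A B X -> is_prod inc l O I A B Y -> X = Y.
Proof.
  intros HAl HBl (B1 & P1 & nI & k & n & nB & k2 & S1)%is_prod_config
    (C1 & Q1 & nI' & k' & n' & nB' & k2' & S2)%is_prod_config.
  apply (prod_config_unique A B B1 P1 X nI k n nB k2 C1 Q1 Y nI' k' n' nB' k2'); auto.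
Qed.

Lemma is_prod_config_with A B X B1 : inc A l -> inc B l -> ~ inc B1 l ->
  is_prod inc l O I A B X -> exists P1 nI k n nB k2, prod_config A B B1 P1 X nI k n nB k2.
Proof.
  intros HAl HBl HB1 HP.
  destruct (prod_config_exists A B B1) as (P1 & Y & nI & k & n & nB & k2 & S); auto.
  replace X with Y; [eauto 7|].
  apply (is_prod_unique A B); auto. apply is_prod_config. eauto 8.
Qed.

Lemma is_prod_0l B X : inc B l -> is_prod inc l O I O B X -> X = O.
Proof.
  intros HBl (B1 & P1 & nI & k & n & nB & k2 & S)%is_prod_config.
  apply (prod_config_0l O B B1 P1 X nI k n nB k2); auto.
Qed.

Lemma is_prod_0r A X : is_prod inc l O I A O X -> X = O.
Proof.
  intros (B1 & P1 & nI & k & n & nB & k2 & S)%is_prod_config.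
  apply (prod_config_0r A O B1 P1 X nI k n nB k2); auto.
Qed.

Lemma is_prod_zero A B : inc A l -> inc B l -> A = O \/ B = O -> is_prod inc l O I A B O.
Proof.
  intros HAl HBl HAB. destruct (is_prod_exists A B) as [X HX]; auto.
  enough (X = O) by (subst X; exact HX).
  destruct HAB as [-> | ->]; [apply (is_prod_0l B) | apply (is_prod_0r A)]; auto.
Qed.

Lemma prod_config_inj A B B' B1 P1 P1' X nI k n nB k2 nI' k' n' nB' k2' :
  inc A l -> inc B l -> inc B' l -> A <> O ->
  prod_config A B B1 P1 X nI k n nB k2 -> prod_config A B' B1 P1' X nI' k' n' nB' k2' -> B = B'.
Proof.
  intros HAl HBl HB'l HAO S S'.
  assert (HP1O : P1 <> O)
    by (intro; apply HAO; apply (prod_config_P1_O A B B1 P1 X nI k n nB k2); auto).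
  destruct (prod_config_lines _ _ _ _ _ _ _ _ _ _ S) as (G1 & G2 & G3 & G4).
  destruct_prod_config S.
  destruct S' as (_ & HIn' & HBnI' & HAk' & Hkn' & HPk' & HOn' & HBn' & HPn' & HBnB' & HB1nB' &
    HPk2' & Hk2' & HXk2' & _).
  assert (n' = n) by (apply (line_unique O B1); auto; intros ->; auto). subst n'.
  assert (nI' = nI) by (apply (line_unique I B1); auto; intros ->; auto). subst nI'.
  assert (k' = k) by (apply (par_through_unique A k' k nI); auto). subst k'.
  assert (k <> n) by (intros ->; auto).
  assert (P1' = P1) by (apply (meet_unique k n); auto). subst P1'.
  assert (HP1X : P1 <> X) by (intros ->; apply HP1O, (meet_unique n l); auto).
  assert (k2' = k2) by (apply (line_unique P1 X); auto). subst k2'.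
  assert (nB' = nB) by (apply (par_through_unique B1 nB' nB k2); auto; apply par_sym; auto).
  subst nB'.
  apply (meet_unique nB l); auto. intros ->; auto.
Qed.

Lemma is_prod_inj_r A B B' X : inc A l -> inc B l -> inc B' l -> A <> O ->
  is_prod inc l O I A B X -> is_prod inc l O I A B' X -> B = B'.
Proof.
  intros HAl HBl HB'l HAO (B1 & P1 & nI & k & n & nB & k2 & S)%is_prod_config HP'.
  assert (HB1 : ~ inc B1 l) by apply S.
  destruct (is_prod_config_with A B' X B1) as (P1' & nI' & k' & n' & nB' & k2' & S'); auto.
  apply (prod_config_inj A B B' B1 P1 P1' X nI k n nB k2 nI' k' n' nB' k2'); auto.
Qed.

End Multiplication.

Definition projects l l' d P P' : Prop :=
  inc P l /\ inc P' l' /\ exists m, inc P m /\ inc P' m /\ m ∥ d.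

Lemma projects_sym l l' d P P' : projects l l' d P P' -> projects l' l d P' P.
Proof. intros (H1 & H2 & m & ? & ? & ?). repeat split; auto. exists m; auto. Qed.

Lemma projects_common l l' d P : inc P l -> inc P l' -> projects l l' d P P.
Proof.
  intros H1 H2. destruct (par_through P d) as [m [? ?]]. repeat split; auto. exists m; auto.
Qed.

Lemma projects_exists l l' d P : ~ d ∥ l' -> inc P l -> exists P', projects l l' d P P'.
Proof.
  intros Hd HP. destruct (par_through P d) as [m [Hm1 Hm2]].
  destruct (meet_of_not_par m l') as [P' [H1 H2]].
  { apply (not_par_compat d l' m l'); auto. apply par_refl. }
  exists P'; repeat split; auto; exists m; auto.
Qed.

Lemma projects_unique l l' d P P1 P2 : ~ d ∥ l' ->
  projects l l' d P P1 -> projects l l' d P P2 -> P1 = P2.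
Proof.
  intros Hd (H1 & H2 & m1 & G1 & G2 & G3) (_ & H3 & m2 & G4 & G5 & G6).
  assert (m1 = m2) by (apply (par_through_unique P m1 m2 d); auto). subst m2.
  apply NNPP; intro E. apply Hd. assert (m1 = l') by (apply (line_unique P1 P2); auto).
  subst; apply par_sym; auto.
Qed.

Lemma projects_inj l l' d P Q P' : ~ d ∥ l ->
  projects l l' d P P' -> projects l l' d Q P' -> P = Q.
Proof. intros Hd H1 H2. apply (projects_unique l' l d P'); auto; apply projects_sym; auto. Qed.

Lemma projects_same l d P P' : ~ d ∥ l -> projects l l d P P' -> P = P'.
Proof.
  intros Hd H. apply (projects_unique l l d P); auto. apply projects_common; apply H.
Qed.

Lemma projects_trans l k l' d P Q R :
  projects l k d P Q -> projects l l' d P R -> projects k l' d Q R.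
Proof.
  intros (H1 & H2 & m1 & G1 & G2 & G3) (_ & H3 & m2 & G4 & G5 & G6).
  assert (m1 = m2) by (apply (par_through_unique P m1 m2 d); auto). subst m2.
  repeat split; auto; exists m1; auto.
Qed.

Lemma little_desargues O O' dO d Y Y' dY Z Z' dZ p p' q q' :
  inc O dO -> inc O' dO -> dO ∥ d -> O <> O' ->
  inc Y dY -> inc Y' dY -> dY ∥ d -> inc Z dZ -> inc Z' dZ -> dZ ∥ d ->
  ~ inc Y dO -> ~ inc Z dO -> Y <> Z ->
  inc O p -> inc Y p -> inc O' p' -> inc Y' p' -> p ∥ p' ->
  inc O q -> inc Z q -> inc O' q' -> inc Z' q' -> q ∥ q' ->
  Y' <> Z' /\ (forall r r', inc Y r -> inc Z r -> inc Y' r' -> inc Z' r' -> r ∥ r').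
Proof.
  intros HOd HO'd HdOd HOO' HYd HY'd HdYd HZd HZ'd HdZd HYO HZO HYZ Hp1 Hp2 Hp3 Hp4 Hpp
    Hq1 Hq2 Hq3 Hq4 Hqq.
  assert (Hpp' : p <> p') by (intros <-; apply HYO; rewrite <- (line_unique O O' p dO); auto).
  assert (Hqq' : q <> q') by (intros <-; apply HZO; rewrite <- (line_unique O O' q dO); auto).
  assert (HYY' : Y <> Y') by (intros <-; apply Hpp', (par_eq_of_common p p' Y); auto).
  assert (HZZ' : Z <> Z') by (intros <-; apply Hqq', (par_eq_of_common q q' Z); auto).
  assert (HY'O' : Y' <> O').
  { intros ->. apply HYO. now rewrite <- (par_through_unique O' dY dO d). }
  assert (HZ'O' : Z' <> O').
  { intros ->. apply HZO. now rewrite <- (par_through_unique O' dZ dO d). }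
  destruct (classic (dY = dZ)) as [<-|E].
  - assert (HY'Z' : Y' <> Z').
    { intros <-.
      assert (p' = q') by (apply (line_unique O' Y'); auto). subst q'.
      assert (p = q) by (apply (par_eq_of_common p q O); auto;
                         apply (par_trans p p' q); auto; apply par_sym; auto).
      subst q. assert (p = dY) by (apply (line_unique Y Z); auto). subst p.
      apply HYO. now rewrite <- (par_through_unique O dY dO d). }
    split; auto. intros r r' Hr1 Hr2 Hr3 Hr4.
    rewrite (line_unique Y Z r dY), (line_unique Y' Z' r' dY); auto. apply par_refl.
  - assert (HY'Z' : Y' <> Z') by (intros <-; apply E, (par_through_unique Y' dY dZ d); auto).
    split; auto. intros r r' Hr1 Hr2 Hr3 Hr4.
    apply (desargues Y O Z Y' O' Z' dY dO dZ p p' q q' r r'); auto; try (intros ->; auto).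
    left; split; [|split]; eapply par_trans; eauto; apply par_sym; auto.
Qed.

Lemma is_prod_project_zero l l' d O I A B X O' I' A' B' X' :
  ~ d ∥ l -> ~ d ∥ l' -> O <> I -> A = O \/ B = O ->
  projects l l' d O O' -> projects l l' d I I' -> projects l l' d A A' ->
  projects l l' d B B' -> projects l l' d X X' ->
  is_prod inc l O I A B X -> is_prod inc l' O' I' A' B' X'.
Proof.
  intros Hdl Hdl' HOI HAB PO PI PA PB PX HP.
  assert (HO'I' : O' <> I') by (intros <-; apply HOI, (projects_inj l l' d O I O'); auto).
  assert (HO : inc O l) by apply PO. assert (HI : inc I l) by apply PI.
  assert (X = O).
  { apply (is_prod_unique l O I HO HI HOI A B); auto; [apply PA|apply PB|].
    apply is_prod_zero; auto; [apply PA|apply PB]. }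
  subst X. rewrite (projects_unique l l' d O X' O'); auto.
  apply is_prod_zero; [apply PO|apply PI|auto|apply PA|apply PB|].
  destruct HAB as [-> | ->]; [left|right]; apply (projects_unique l l' d O); auto.
Qed.

Section ParallelLines.
Variables (l l' d : Ln).
Hypotheses (Hll' : l ∥ l') (Hne : l <> l') (Hdl : ~ d ∥ l) (Hdl' : ~ d ∥ l').

(* With the image [O'] of [O] as auxiliary point, the figure for [A + B] on [l]
   already is a figure for [A' + B'] on [l']: its point [P1] is [A']. *)
Lemma is_sum_project_par O A B X O' A' B' X' :
  projects l l' d O O' -> projects l l' d A A' -> projects l l' d B B' -> projects l l' d X X' ->
  is_sum inc l O A B X -> is_sum inc l' O' A' B' X'.
Proof.
  intros (HO & HO' & mO & HOm & HO'm & HmOd) (HAl & HA' & mA & HAm & HA'm & HmAd)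
    (HBl & HB' & mB & HBm & HB'm & HmBd) (HXl & HX' & mX & HXm & HX'm & HmXd) HS.
  assert (HO'l : ~ inc O' l) by (apply (par_off l' l O'); auto; apply par_sym; auto).
  destruct (is_sum_config_with l O HO A B X O') as (P1 & m & n & k & n2 & k2 & S); auto.
  destruct S as (_ & HO'm' & Hml & HPm & HOn & HO'n & HAk & Hkn & HPk & HBn2 & HO'n2 & HPk2 &
    Hk2 & HXk2 & _).
  assert (m = l') by (apply (par_through_unique O' m l' l); auto; apply par_sym; auto). subst m.
  assert (n = mO) by (apply (line_unique O O'); auto; intros ->; auto). subst n.
  assert (k = mA) by (apply (par_through_unique A k mA d); auto; eapply par_trans; eauto).
  subst k.
  assert (P1 = A').
  { apply (meet_unique l' mA); auto. intros ->; apply Hdl'; apply par_sym; auto. }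
  subst P1.
  exists B, X. split; [apply (par_off l l' B); auto|].
  split; [exists l; auto|].
  split; [exists n2, k2; auto|].
  split; [|auto].
  exists mB, mX. repeat split; auto. eapply par_trans; eauto. apply par_sym; auto.
Qed.

Lemma translate_par O O' dO n n' Y Y' Z Z' :
  inc O l -> inc O' l' -> inc O dO -> inc O' dO -> dO ∥ d ->
  inc O n -> inc O' n' -> n ∥ n' -> n <> l -> n <> dO ->
  projects n n' d Y Y' -> Y <> O -> projects l l' d Z Z' -> Z <> O ->
  Y' <> Z' /\ (forall r r', inc Y r -> inc Z r -> inc Y' r' -> inc Z' r' -> r ∥ r').
Proof.
  intros HOl HO'l' HOdO HO'dO HdOd HOn HO'n' Hnn' Hnl HndO
    (HYn & HY'n' & dY & HYd & HY'd & HdYd) HYO (HZl & HZ'l' & dZ & HZd & HZ'd & HdZd) HZO.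
  assert (HOO' : O <> O') by (intros <-; apply (par_off l l' O); auto).
  apply (little_desargues O O' dO d Y Y' dY Z Z' dZ n n' l l'); auto.
  - intro. apply HYO, (meet_unique n dO); auto.
  - intro. apply HZO, (meet_unique l dO); auto. intros ->. apply Hdl, par_sym; auto.
  - intros <-. apply HYO, (meet_unique n l); auto.
Qed.

Lemma is_prod_translate O I A B X O' I' A' B' X' B1 P1 nI k n nB k2 dO n' B1' P1' :
  inc O l -> inc I l -> O <> I -> inc O' l' -> inc O dO -> inc O' dO -> dO ∥ d ->
  ~ inc B1 dO -> prod_config l O I A B B1 P1 X nI k n nB k2 ->
  A <> O -> B <> O -> X <> O -> P1 <> O ->
  inc O' n' -> n' ∥ n -> projects n n' d B1 B1' -> projects n n' d P1 P1' ->
  projects l l' d I I' -> projects l l' d A A' -> projects l l' d B B' -> projects l l' d X X' ->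
  is_prod inc l' O' I' A' B' X'.
Proof.
  intros HO HI HOI HO' HOdO HO'dO HdOd HB1d S HAO HBO HXO HP1O HO'n' Hn'n PB1 PP1 PI PA PB PX.
  destruct (prod_config_lines l O I HO HI HOI _ _ _ _ _ _ _ _ _ _ S) as (Hnl & _).
  destruct S as (HB1l & HInI & HB1nI & HAk & HknI & HP1k & HOn & HB1n & HP1n & HBnB & HB1nB &
    HP1k2 & Hk2nB & HXk2 & HXl).
  assert (HndO : n <> dO) by (intros ->; auto).
  assert (Hnn' : n ∥ n') by (apply par_sym; auto).
  assert (HB1O : B1 <> O) by (intros ->; auto).
  assert (HIO : I <> O) by auto.
  destruct (translate_par O O' dO n n' B1 B1' I I') as [HB1'I' E1]; auto.
  destruct (translate_par O O' dO n n' P1 P1' A A') as [HP1'A' E2]; auto.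
  destruct (translate_par O O' dO n n' B1 B1' B B') as [HB1'B' E3]; auto.
  destruct (translate_par O O' dO n n' P1 P1' X X') as [HP1'X' E4]; auto.
  destruct (line_through B1' I' HB1'I') as [nI' [H1 H2]].
  destruct (line_through P1' A' HP1'A') as [k' [H3 H4]].
  destruct (line_through B1' B' HB1'B') as [nB' [H5 H6]].
  destruct (line_through P1' X' HP1'X') as [k2' [H7 H8]].
  exists B1', P1'. split.
  { intro HB1'l'.
    assert (n' <> l').
    { intros ->. apply Hnl, (par_eq_of_common n l O); auto.
      apply (par_trans n l' l); apply par_sym; auto. }
    assert (B1' = O') by (apply (meet_unique n' l'); auto; apply PB1). subst B1'.
    destruct PB1 as (_ & _ & m & HB1m & HO'm & Hmd).
    apply HB1d. rewrite <- (par_through_unique O' m dO d); auto. }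
  split.
  { exists nI', k'. repeat split; auto.
    apply (par_trans k' k nI'); [apply par_sym; auto|].
    apply (par_trans k nI nI'); auto. }
  split; [exists n'; repeat split; auto; apply PB1 || apply PP1|].
  split; [|apply PX].
  exists nB', k2'. repeat split; auto.
  apply (par_trans k2' k2 nB'); [apply par_sym; auto|].
  apply (par_trans k2 nB nB'); auto.
Qed.

Lemma is_prod_project_par O I A B X O' I' A' B' X' : O <> I ->
  projects l l' d O O' -> projects l l' d I I' -> projects l l' d A A' ->
  projects l l' d B B' -> projects l l' d X X' ->
  is_prod inc l O I A B X -> is_prod inc l' O' I' A' B' X'.
Proof.
  intros HOI PO PI PA PB PX HP.
  destruct (classic (A = O \/ B = O)) as [HAB|HAB].
  { apply (is_prod_project_zero l l' d O I A B X); auto. }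
  assert (HAO : A <> O) by tauto. assert (HBO : B <> O) by tauto.
  assert (HO : inc O l) by apply PO. assert (HI : inc I l) by apply PI.
  assert (HAl : inc A l) by apply PA. assert (HBl : inc B l) by apply PB.
  destruct PO as (_ & HO' & dO & HOdO & HO'dO & HdOd).
  assert (HOO' : O <> O') by (intros <-; apply (par_off l l' O); auto).
  assert (HdOl : dO <> l) by (intros ->; apply Hdl, par_sym; auto).
  destruct (point_off_meeting_lines dO l O O' I) as [B1 [HB1d HB1l]]; auto.
  destruct (is_prod_config_with l O I HO HI HOI A B X B1) as (P1 & nI & k & n & nB & k2 & S);
    auto.
  assert (HP1O : P1 <> O)
    by (intro; apply HAO; apply (prod_config_P1_O l O I HO HI A B B1 P1 X nI k n nB k2); auto).
  assert (HXO : X <> O)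
    by (intro; destruct (prod_config_eq0 l O I HO HI HOI A B B1 P1 X nI k n nB k2); auto).
  assert (HOn : inc O n) by apply S. assert (HB1n : inc B1 n) by apply S.
  assert (Hdn : ~ d ∥ n).
  { intro Hnd. apply HB1d. rewrite <- (par_through_unique O n dO d); auto. apply par_sym; auto. }
  destruct (par_through O' n) as [n' [HO'n' Hn'n]].
  assert (Hdn' : ~ d ∥ n') by (intro; apply Hdn; eapply par_trans; eauto).
  destruct (projects_exists n n' d B1) as [B1' PB1]; auto.
  destruct (projects_exists n n' d P1) as [P1' PP1]; [auto|apply S|].
  apply (is_prod_translate O I A B X O' I' A' B' X' B1 P1 nI k n nB k2 dO n' B1' P1'); auto.
Qed.

End ParallelLines.

Section MeetingLines.
Variables (l l' d : Ln) (O : Pt).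
Hypotheses (Hll' : l <> l') (HOl : inc O l) (HOl' : inc O l') (Hdl : ~ d ∥ l) (Hdl' : ~ d ∥ l').

Lemma meeting_lines_common P : inc P l -> inc P l' -> P = O.
Proof. intros. apply (meet_unique l l'); auto. Qed.

Lemma projects_neq_O P P' : projects l l' d P P' -> P <> O -> P' <> O.
Proof.
  intros HP HPO ->. apply HPO, (projects_inj l l' d P O O); auto. apply projects_common; auto.
Qed.

Lemma sum_central_aux_point A B X A' mA : A <> O -> inc A l -> inc A' l' ->
  inc A mA -> inc A' mA -> mA ∥ d -> inc B l -> is_sum inc l O A B X ->
  exists dO B1 L n2 k2, dO ∥ d /\ sum_config l O A B B1 A' X L dO mA n2 k2.
Proof.
  intros HAO HAl HA'l' HAm HA'm HmAd HBl HS.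
  assert (HA'O : A' <> O).
  { intros ->. apply HAO, (projects_inj l l' d A O O); [auto| |apply projects_common; auto].
    repeat split; auto. exists mA; auto. }
  destruct (par_through O d) as [dO [HOd HdOd]].
  destruct (par_through A' l) as [L [HA'L HLl]].
  destruct (meet_of_not_par dO L) as [B1 [HB1d HB1L]]; [apply (not_par_compat d l); auto|].
  assert (HA'l : ~ inc A' l) by (intro; apply HA'O, meeting_lines_common; auto).
  assert (HB1l : ~ inc B1 l) by (apply (par_line_off L l A' B1); auto).
  destruct (is_sum_config_with l O HOl A B X B1) as (P1 & m & n & k & n2 & k2 & S); auto.
  exists dO, B1, L, n2, k2. split; auto.
  destruct_sum_config S.
  assert (m = L) by (apply (par_through_unique B1 m L l); auto). subst m.
  assert (n = dO) by (apply (line_unique O B1); auto; intros ->; auto). subst n.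
  assert (k = mA) by (apply (par_through_unique A k mA d); auto; eapply par_trans; eauto). subst k.
  assert (P1 = A').
  { apply (meet_unique L mA); auto. intros ->. apply Hdl, (par_trans d mA l); auto.
    apply par_sym; auto. }
  subst P1. repeat split; auto.
Qed.

(* Desargues centred at [O] for [B1 B B'] and [Z X X']. *)
Lemma sum_central_first_desargues A B X A' B' X' B1 L dO mA n2 k2 :
  B <> O -> X <> O -> X <> B -> dO ∥ d -> sum_config l O A B B1 A' X L dO mA n2 k2 ->
  A' <> B1 -> projects l l' d B B' -> projects l l' d X X' ->
  exists Z, inc Z dO /\ inc Z k2 /\ ~ inc B1 k2 /\
    forall e1 e2, inc B1 e1 -> inc B' e1 -> inc Z e2 -> inc X' e2 -> e1 ∥ e2.
Proof.
  intros HBO HXO HXB HdOd S HA'B1 PB PX.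
  assert (HB'O := projects_neq_O B B' PB HBO).
  assert (HX'O := projects_neq_O X X' PX HXO).
  assert (HB'X' : B' <> X') by (intros <-; apply HXB, (projects_inj l l' d X B B'); auto).
  destruct PB as (HBl & HB'l' & mB & HBm & HB'm & HmBd).
  destruct PX as (HXl & HX'l' & mX & HXm & HX'm & HmXd).
  destruct_sum_config S.
  assert (HdOl : dO <> l) by (intros ->; apply Hdl, par_sym; auto).
  assert (HdOl' : dO <> l') by (intros ->; apply Hdl', par_sym; auto).
  assert (HBdO : ~ inc B dO) by (intro; apply HBO, (meet_unique dO l); auto).
  assert (HXdO : ~ inc X dO) by (intro; apply HXO, (meet_unique dO l); auto).
  assert (HX'dO : ~ inc X' dO) by (intro; apply HX'O, (meet_unique dO l'); auto).
  assert (HB1O : B1 <> O) by (intros ->; auto).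
  assert (HB1l' : ~ inc B1 l') by (intro; apply HB1O, (meet_unique dO l'); auto).
  assert (Hn2dO : n2 <> dO) by (intros ->; auto).
  destruct (meet_of_not_par dO k2) as [Z [HZd HZk2]].
  { intro H. apply (not_par_of_meet n2 dO B1); auto.
    apply (par_trans n2 k2 dO); apply par_sym; auto. }
  assert (HB1k2 : ~ inc B1 k2).
  { intro. assert (k2 = n2) by (apply (par_eq_of_common k2 n2 B1); auto). subst k2.
    apply HA'B1, (meet_unique n2 L); auto. intros <-. apply (par_line_off n2 l B1 B); auto. }
  exists Z. repeat split; auto. intros e1 e2 He11 He12 He21 He22.
  assert (HmBX : mB <> mX).
  { intros <-. apply HXB, (meet_unique mB l); auto. intros ->; apply Hdl, par_sym; auto. }
  apply (desargues B1 B B' Z X X' dO l l' n2 k2 mB mX e1 e2); auto;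
    try (intros ->; auto; fail); try (intros <-; auto; fail).
  - right; exists O; auto.
  - intros <-; apply HBO, meeting_lines_common; auto.
  - intros <-; apply HXO, meeting_lines_common; auto.
  - apply par_sym; auto.
  - eapply par_trans; eauto; apply par_sym; auto.
Qed.

(* Desargues centred at [Z] for [X O X'] and [A' B1 Q]: [A' Q] is parallel to [X X'],
   hence to [d]. *)
Lemma sum_central_second_desargues A B X A' X' B1 L dO mA n2 k2 Z e2 m' Q :
  X <> O -> dO ∥ d -> sum_config l O A B B1 A' X L dO mA n2 k2 -> A' <> B1 ->
  projects l l' d X X' -> inc Z dO -> inc Z k2 -> inc Z e2 -> inc X' e2 -> k2 <> e2 ->
  inc B1 m' -> m' ∥ l' -> inc Q m' -> inc Q e2 -> B1 <> Q -> inc Q mA.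
Proof.
  intros HXO HdOd S HA'B1 PX HZd HZk2 HZe2 HX'e2 Hk2e2 HB1m' Hm'l' HQm' HQe2 HB1Q.
  assert (HX'O := projects_neq_O X X' PX HXO).
  destruct PX as (_ & HX'l' & mX & HXm & HX'm & HmXd).
  destruct_sum_config S.
  assert (HdOl' : dO <> l') by (intros ->; apply Hdl', par_sym; auto).
  assert (HB1O : B1 <> O) by (intros ->; auto).
  assert (HB1l' : ~ inc B1 l') by (intro; apply HB1O, (meet_unique dO l'); auto).
  assert (HA'l : ~ inc A' l) by (apply (par_line_off L l B1 A'); auto).
  assert (HLm' : L <> m').
  { intros <-. apply Hll', (par_eq_of_common l l' O); auto.
    apply (par_trans l L l'); [apply par_sym|]; auto. }
  assert (HA'Q : A' <> Q) by (intros <-; apply HA'B1, (meet_unique L m'); auto).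
  assert (HQX' : Q <> X') by (intros ->; apply (par_line_off_sym m' l' B1 X'); auto).
  destruct (line_through A' Q HA'Q) as [g [Hg1 Hg2]].
  assert (HmAd : mA ∥ d) by (eapply par_trans; eauto).
  assert (HXdO : ~ inc X dO).
  { intro. apply HXO, (meet_unique dO l); auto. intros ->; apply Hdl, par_sym; auto. }
  assert (HX'dO : ~ inc X' dO) by (intro; apply HX'O, (meet_unique dO l'); auto).
  enough (g = mA) by (subst; auto).
  apply (par_through_unique A' g mA d); auto.
  apply (par_trans g mX d); auto. apply par_sym.
  apply (desargues X O X' A' B1 Q k2 dO e2 l L l' m' mX g); auto;
    try (intros ->; auto; fail); try (intros <-; auto; fail).
  - right; exists Z; auto.
  - intros <-; apply HXO, meeting_lines_common; auto.
  - apply par_sym; auto.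
  - apply par_sym; auto.
Qed.

(* With [B1] on the parallel [dO] to [d] through [O] and [A' B1] parallel to [l], the figure
   for [A + B] on [l] has [P1 = A']; Desargues centred at [O] and then at [Z = dO ∩ A' X]
   shows that [B1] also serves as auxiliary point for [A' + B'] on [l']. *)
Lemma is_sum_project_central_nonzero A B X A' B' X' : A <> O -> B <> O -> X <> O ->
  projects l l' d A A' -> projects l l' d B B' -> projects l l' d X X' ->
  is_sum inc l O A B X -> is_sum inc l' O A' B' X'.
Proof.
  intros HAO HBO HXO PA PB PX HS.
  assert (HB'O := projects_neq_O B B' PB HBO).
  assert (HX'O := projects_neq_O X X' PX HXO).
  assert (HBl : inc B l) by apply PB.
  destruct PA as (HAl & HA'l' & mA & HAm & HA'm & HmAd).
  destruct (sum_central_aux_point A B X A' mA) as (dO & B1 & L & n2 & k2 & HdOd & S); auto.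
  destruct (sum_config_nondeg l O HOl A B B1 A' X L dO mA n2 k2) as (HA'B1 & HXB & _); auto.
  destruct (sum_central_first_desargues A B X A' B' X' B1 L dO mA n2 k2)
    as (Z & HZd & HZk2 & HB1k2 & He); auto.
  destruct PB as (_ & HB'l' & mB & HBm & HB'm & HmBd).
  destruct PX as (HXl & HX'l' & mX & HXm & HX'm & HmXd).
  destruct_sum_config S.
  assert (HdOl' : dO <> l') by (intros ->; apply Hdl', par_sym; auto).
  assert (HB1O : B1 <> O) by (intros ->; auto).
  assert (HB1l' : ~ inc B1 l') by (intro; apply HB1O, (meet_unique dO l'); auto).
  assert (HX'dO : ~ inc X' dO) by (intro; apply HX'O, (meet_unique dO l'); auto).
  assert (HB1B' : B1 <> B') by (intros ->; auto).
  assert (HZX' : Z <> X') by (intros ->; auto).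
  destruct (line_through B1 B' HB1B') as [e1 [He11 He12]].
  destruct (line_through Z X' HZX') as [e2 [He21 He22]].
  specialize (He e1 e2 He11 He12 He21 He22).
  destruct (par_through B1 l') as [m' [HB1m' Hm'l']].
  assert (HB'm' : ~ inc B' m') by (apply (par_line_off_sym m' l' B1 B'); auto).
  destruct (meet_of_not_par e2 m') as [Q [HQe2 HQm']].
  { intro H. apply (not_par_of_meet e1 m' B1); auto; [intros ->; auto|]. eapply par_trans; eauto. }
  assert (Hk2e2 : k2 <> e2).
  { intros <-.
    assert (e1 = n2) by (apply (par_eq_of_common e1 n2 B1); auto; eapply par_trans; eauto).
    subst e1.
    assert (n2 = mB).
    { apply (line_unique B B'); auto. intros <-; apply HBO, meeting_lines_common; auto. }
    subst n2. apply HBO, (meet_unique dO l); auto; [intros ->; apply Hdl, par_sym; auto|].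
    rewrite <- (par_through_unique B1 mB dO d); auto. }
  assert (HB1Q : B1 <> Q).
  { intros <-. assert (e2 = e1) by (apply (par_eq_of_common e2 e1 B1); auto; apply par_sym; auto).
    subst e2. apply HB1k2. replace B1 with Z; auto.
    apply (meet_unique e1 dO); auto. intros ->; auto. }
  assert (HQmA : inc Q mA).
  { apply (sum_central_second_desargues A B X A' X' B1 L dO mA n2 k2 Z e2 m' Q); auto.
    - unfold sum_config; repeat split; auto.
    - split; [|split]; eauto. }
  exists B1, Q. split; [auto|].
  split; [exists m'; auto|].
  split; [exists dO, mA; repeat split; auto|].
  split; [exists e1, e2; repeat split; auto; apply par_sym; auto|auto].
Qed.

(* With [I'] as auxiliary point on [l], the figure for [A B] is, read with auxiliary
   point [B], a figure for [A' B'] on [l']. *)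
Lemma is_prod_project_central I A B X I' A' B' X' : inc I l -> O <> I ->
  projects l l' d I I' -> projects l l' d A A' -> projects l l' d B B' -> projects l l' d X X' ->
  is_prod inc l O I A B X -> is_prod inc l' O I' A' B' X'.
Proof.
  intros HI HOI PI PA PB PX HP.
  assert (POO : projects l l' d O O) by (apply projects_common; auto).
  destruct (classic (A = O \/ B = O)) as [HAB|HAB].
  { apply (is_prod_project_zero l l' d O I A B X); auto. }
  assert (HBO : B <> O) by tauto.
  assert (HI'O : I' <> O) by (apply (projects_neq_O I); auto).
  assert (HI'l : ~ inc I' l) by (intro; apply HI'O, meeting_lines_common; auto; apply PI).
  destruct PI as (_ & HI' & mI & HIm & HI'm & HmId).
  destruct PA as (HAl & HA' & mA & HAm & HA'm & HmAd).
  destruct PB as (HBl & HB' & mB & HBm & HB'm & HmBd).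
  destruct PX as (_ & HX' & mX & HXm & HX'm & HmXd).
  destruct (is_prod_config_with l O I HOl HI HOI A B X I') as (P1 & nI & k & n & nB & k2 & S);
    auto.
  destruct_prod_config S.
  assert (nI = mI) by (apply (line_unique I I'); auto; intros <-; auto). subst nI.
  assert (k = mA) by (apply (par_through_unique A k mA d); auto; eapply par_trans; eauto).
  subst k.
  assert (n = l') by (apply (line_unique O I'); auto). subst n.
  assert (P1 = A').
  { apply (meet_unique mA l'); auto. intros ->; apply Hdl', par_sym; auto. }
  subst P1.
  exists B, X. split; [intro; apply HBO, meeting_lines_common; auto|].
  split; [exists nB, k2; auto|].
  split; [exists l; auto|].
  split; [|auto].
  exists mB, mX. repeat split; auto. eapply par_trans; eauto. apply par_sym; auto.
Qed.

End MeetingLines.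

Lemma is_sum_project_central l l' d O A B X A' B' X' :
  l <> l' -> inc O l -> inc O l' -> ~ d ∥ l -> ~ d ∥ l' ->
  projects l l' d A A' -> projects l l' d B B' -> projects l l' d X X' ->
  is_sum inc l O A B X -> is_sum inc l' O A' B' X'.
Proof.
  intros Hne HO HO' Hdl Hdl' PA PB PX HS.
  assert (POO : projects l l' d O O) by (apply projects_common; auto).
  assert (HAl : inc A l) by apply PA. assert (HBl : inc B l) by apply PB.
  assert (HA' : inc A' l') by apply PA. assert (HB' : inc B' l') by apply PB.
  destruct (classic (A = O)) as [->|HAO].
  { rewrite (is_sum_0l l O HO B X) in PX; auto.
    rewrite (projects_unique l l' d O A' O), (projects_unique l l' d B X' B'); auto.
    apply is_sum_0l_self; auto. }
  destruct (classic (B = O)) as [->|HBO].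
  { rewrite (is_sum_0r l O HO A X) in PX; auto.
    rewrite (projects_unique l l' d O B' O), (projects_unique l l' d A X' A'); auto.
    apply is_sum_0r_self; auto. }
  destruct (classic (X = O)) as [->|HXO];
    [|apply (is_sum_project_central_nonzero l l' d O Hne HO HO' Hdl Hdl' A B X); auto].
  rewrite (projects_unique l l' d O X' O); auto.
  destruct (is_sum_exists l' O HO' A' B') as [Y HY]; auto.
  (* Otherwise projecting [A' + B'] back to [l] would contradict [A + B = O]. *)
  destruct (classic (Y = O)) as [->|HYO]; [auto|exfalso].
  assert (HYl' : inc Y l') by (eapply is_sum_inc; eauto).
  destruct (projects_exists l' l d Y Hdl HYl') as [Y' PY].
  assert (HA'O : A' <> O) by (apply (projects_neq_O l l' d O HO HO' Hdl A); auto).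
  assert (HB'O : B' <> O) by (apply (projects_neq_O l l' d O HO HO' Hdl B); auto).
  assert (HY'O : Y' <> O) by (apply (projects_neq_O l' l d O HO' HO Hdl' Y); auto).
  apply HY'O, (is_sum_unique l O HO A B); auto.
  apply (is_sum_project_central_nonzero l' l d O (not_eq_sym Hne) HO' HO Hdl' Hdl A' B' Y);
    auto; apply projects_sym; auto.
Qed.

Lemma is_sum_project_par_or_eq l l' d O A B X O' A' B' X' : l ∥ l' -> ~ d ∥ l -> ~ d ∥ l' ->
  projects l l' d O O' -> projects l l' d A A' -> projects l l' d B B' -> projects l l' d X X' ->
  is_sum inc l O A B X -> is_sum inc l' O' A' B' X'.
Proof.
  intros Hll' Hdl Hdl' PO PA PB PX HS.
  destruct (classic (l = l')) as [<-|Hne];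
    [|apply (is_sum_project_par l l' d Hll' Hne Hdl' O A B X); auto].
  rewrite <- (projects_same l d O O'), <- (projects_same l d A A'),
    <- (projects_same l d B B'), <- (projects_same l d X X'); auto.
Qed.

Lemma is_prod_project_par_or_eq l l' d O I A B X O' I' A' B' X' :
  l ∥ l' -> ~ d ∥ l -> ~ d ∥ l' -> O <> I ->
  projects l l' d O O' -> projects l l' d I I' -> projects l l' d A A' ->
  projects l l' d B B' -> projects l l' d X X' ->
  is_prod inc l O I A B X -> is_prod inc l' O' I' A' B' X'.
Proof.
  intros Hll' Hdl Hdl' HOI PO PI PA PB PX HP.
  destruct (classic (l = l')) as [<-|Hne];
    [|apply (is_prod_project_par l l' d Hll' Hne Hdl Hdl' O I A B X); auto].
  rewrite <- (projects_same l d O O'), <- (projects_same l d I I'), <- (projects_same l d A A'),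
    <- (projects_same l d B B'), <- (projects_same l d X X'); auto.
Qed.

Lemma is_sum_project l l' d O A B X O' A' B' X' : ~ d ∥ l -> ~ d ∥ l' ->
  projects l l' d O O' -> projects l l' d A A' -> projects l l' d B B' -> projects l l' d X X' ->
  is_sum inc l O A B X -> is_sum inc l' O' A' B' X'.
Proof.
  intros Hdl Hdl' PO PA PB PX HS.
  destruct (classic (l ∥ l')) as [Hp|Hp];
    [apply (is_sum_project_par_or_eq l l' d O A B X); auto|].
  assert (HO : inc O l) by apply PO.
  destruct (par_through O l') as [k [HOk Hkl']].
  assert (Hkl : k <> l) by (intros ->; auto).
  assert (Hdk : ~ d ∥ k) by (intro; apply Hdl'; eapply par_trans; eauto).
  destruct (projects_exists l k d A Hdk) as [A1 PA1]; [apply PA|].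
  destruct (projects_exists l k d B Hdk) as [B1 PB1]; [apply PB|].
  destruct (projects_exists l k d X Hdk) as [X1 PX1]; [apply PX|].
  apply (is_sum_project_par_or_eq k l' d O A1 B1 X1); auto.
  - apply (projects_trans l k l' d O O O'); auto. apply projects_common; auto.
  - apply (projects_trans l k l' d A A1 A'); auto.
  - apply (projects_trans l k l' d B B1 B'); auto.
  - apply (projects_trans l k l' d X X1 X'); auto.
  - apply (is_sum_project_central l k d O A B X A1 B1 X1); auto.
Qed.

Lemma is_prod_project l l' d O I A B X O' I' A' B' X' : ~ d ∥ l -> ~ d ∥ l' -> O <> I ->
  projects l l' d O O' -> projects l l' d I I' -> projects l l' d A A' ->
  projects l l' d B B' -> projects l l' d X X' ->
  is_prod inc l O I A B X -> is_prod inc l' O' I' A' B' X'.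
Proof.
  intros Hdl Hdl' HOI PO PI PA PB PX HP.
  destruct (classic (l ∥ l')) as [Hp|Hp];
    [apply (is_prod_project_par_or_eq l l' d O I A B X); auto|].
  assert (HO : inc O l) by apply PO. assert (HI : inc I l) by apply PI.
  destruct (par_through O l') as [k [HOk Hkl']].
  assert (Hkl : k <> l) by (intros ->; auto).
  assert (Hdk : ~ d ∥ k) by (intro; apply Hdl'; eapply par_trans; eauto).
  assert (POO : projects l k d O O) by (apply projects_common; auto).
  destruct (projects_exists l k d I Hdk) as [I1 PI1]; [auto|].
  destruct (projects_exists l k d A Hdk) as [A1 PA1]; [apply PA|].
  destruct (projects_exists l k d B Hdk) as [B1 PB1]; [apply PB|].
  destruct (projects_exists l k d X Hdk) as [X1 PX1]; [apply PX|].
  apply (is_prod_project_par_or_eq k l' d O I1 A1 B1 X1); auto.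
  - intros <-. apply HOI, (projects_inj l k d O I O); auto.
  - apply (projects_trans l k l' d O O O'); auto.
  - apply (projects_trans l k l' d I I1 I'); auto.
  - apply (projects_trans l k l' d A A1 A'); auto.
  - apply (projects_trans l k l' d B B1 B'); auto.
  - apply (projects_trans l k l' d X X1 X'); auto.
  - apply (is_prod_project_central l k d O (not_eq_sym Hkl) HO HOk Hdl Hdk I A B X); auto.
Qed.

Lemma pick_spec d (Q : Pt -> Prop) : (exists x, Q x) -> Q (pick d Q).
Proof.
  intros H. unfold pick. destruct (excluded_middle_informative _) as [h|h]; [|contradiction].
  apply (proj2_sig (constructive_indefinite_description _ h)).
Qed.

Lemma pick_default d (Q : Pt -> Prop) : ~ (exists x, Q x) -> pick d Q = d.
Proof. intros H. unfold pick. destruct (excluded_middle_informative _); [contradiction|auto]. Qed.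

Lemma pick_inc l d (Q : Pt -> Prop) : (forall Y, Q Y -> inc Y l) -> inc d l -> inc (pick d Q) l.
Proof.
  intros H1 H2. destruct (classic (exists x, Q x)) as [E|E].
  - apply H1, pick_spec, E.
  - rewrite pick_default; auto.
Qed.

Lemma pick_transport (l1 l2 : Ln) (f : Pt -> Pt) d (Q1 Q2 : Pt -> Prop) :
  (forall P Q, inc P l1 -> inc Q l1 -> f P = f Q -> P = Q) ->
  (forall Y, inc Y l2 -> exists P, inc P l1 /\ f P = Y) ->
  (forall Y, Q1 Y -> inc Y l1) -> (forall Y, Q2 Y -> inc Y l2) ->
  (forall Y, inc Y l1 -> (Q1 Y <-> Q2 (f Y))) ->
  (forall Y Y', Q1 Y -> Q1 Y' -> Y = Y') ->
  f (pick d Q1) = pick (f d) Q2.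
Proof.
  intros Hinj Hsurj H1 H2 Hiff Hu.
  destruct (classic (exists x, Q1 x)) as [E|E].
  - assert (HQ1 := pick_spec d Q1 E).
    assert (E2 : exists x, Q2 x) by (exists (f (pick d Q1)); apply Hiff; auto).
    assert (HQ2 := pick_spec (f d) Q2 E2).
    destruct (Hsurj _ (H2 _ HQ2)) as [P [HP EP]].
    rewrite <- EP in HQ2 |- *. apply Hiff in HQ2; auto. f_equal; auto.
  - rewrite (pick_default d Q1 E), pick_default; auto.
    intros [Y HY]. destruct (Hsurj Y (H2 _ HY)) as [P [HP EP]].
    apply E. exists P. apply Hiff; auto. rewrite EP; auto.
Qed.

Lemma sadd_inc l P A B : inc P l -> inc (sadd inc l P A B) l.
Proof. intros H. unfold sadd. apply pick_inc; auto. intros Y HY; eapply is_sum_inc; eauto. Qed.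

Lemma smul_inc l P Q A B : inc P l -> inc (smul inc l P Q A B) l.
Proof. intros H. unfold smul. apply pick_inc; auto. intros Y HY; eapply is_prod_inc; eauto. Qed.

Lemma sopp_inc l P A : inc P l -> inc (sopp inc l P A) l.
Proof. intros H. unfold sopp. apply pick_inc; auto. intros Y HY; apply HY. Qed.

Lemma sinv_inc l P Q A : inc P l -> inc (sinv inc l P Q A) l.
Proof. intros H. unfold sinv. apply pick_inc; auto. intros Y HY; apply HY. Qed.

Lemma sadd_spec l P A B : inc P l -> inc A l -> inc B l -> is_sum inc l P A B (sadd inc l P A B).
Proof. intros. unfold sadd. apply pick_spec, is_sum_exists; auto. Qed.

Lemma smul_spec l P Q A B : inc P l -> inc Q l -> P <> Q -> inc A l -> inc B l ->
  is_prod inc l P Q A B (smul inc l P Q A B).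
Proof. intros. unfold smul. apply pick_spec, is_prod_exists; auto. Qed.

Section ProjectionIsomorphism.
Variables (l1 l2 d : Ln) (O I : Pt) (f : Pt -> Pt).
Hypotheses (Hf : forall P, inc P l1 -> projects l1 l2 d P (f P))
  (Hd1 : ~ d ∥ l1) (Hd2 : ~ d ∥ l2) (HOI : O <> I) (HO : inc O l1) (HI : inc I l1).

Lemma proj_inc P : inc P l1 -> inc (f P) l2.
Proof. intros H; apply (Hf P H). Qed.

Lemma proj_inj P Q : inc P l1 -> inc Q l1 -> f P = f Q -> P = Q.
Proof. intros H1 H2 E. apply (projects_inj l1 l2 d P Q (f P)); auto. rewrite E; auto. Qed.

Lemma proj_surj Y : inc Y l2 -> exists P, inc P l1 /\ f P = Y.
Proof.
  intros HY. destruct (projects_exists l2 l1 d Y Hd1 HY) as [P HP].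
  assert (HPl : inc P l1) by apply HP.
  exists P. split; auto. apply (projects_unique l1 l2 d P); auto. apply projects_sym; auto.
Qed.

Lemma proj_sadd A B : inc A l1 -> inc B l1 ->
  f (sadd inc l1 O A B) = sadd inc l2 (f O) (f A) (f B).
Proof.
  intros HA1 HB1. unfold sadd. apply (pick_transport l1 l2 f); auto using proj_inj, proj_surj.
  - intros Y HY; eapply is_sum_inc; eauto.
  - intros Y HY; eapply is_sum_inc; eauto.
  - intros Y HY; split; intro H.
    + apply (is_sum_project l1 l2 d O A B Y); auto.
    + apply (is_sum_project l2 l1 d (f O) (f A) (f B) (f Y)); auto; apply projects_sym; auto.
  - intros Y Y' H1 H2. apply (is_sum_unique l1 O HO A B); auto.
Qed.

Lemma proj_smul A B : inc A l1 -> inc B l1 ->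
  f (smul inc l1 O I A B) = smul inc l2 (f O) (f I) (f A) (f B).
Proof.
  intros HA1 HB1. unfold smul. apply (pick_transport l1 l2 f); auto using proj_inj, proj_surj.
  - intros Y HY; eapply is_prod_inc; eauto.
  - intros Y HY; eapply is_prod_inc; eauto.
  - intros Y HY; split; intro H.
    + apply (is_prod_project l1 l2 d O I A B Y); auto.
    + apply (is_prod_project l2 l1 d (f O) (f I) (f A) (f B) (f Y)); auto;
        try apply projects_sym; auto.
      intro E; apply HOI, proj_inj; auto.
  - intros Y Y' H1 H2. apply (is_prod_unique l1 O I HO HI HOI A B); auto.
Qed.

Lemma proj_sopp A : inc A l1 -> f (sopp inc l1 O A) = sopp inc l2 (f O) (f A).
Proof.
  intros HA1. unfold sopp. apply (pick_transport l1 l2 f); auto using proj_inj, proj_surj.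
  - intros Y HY; apply HY.
  - intros Y HY; apply HY.
  - intros Y HY. rewrite <- proj_sadd; auto. split; intros [H1 H2]; split; auto.
    + apply proj_inc; auto.
    + rewrite H2; auto.
    + apply proj_inj; auto. apply sadd_inc; auto.
  - intros Y Y' [H1 H2] [H3 H4]. apply (is_sum_inj_r l1 O HO A Y Y' O); auto.
    + rewrite <- H2 at 2. apply sadd_spec; auto.
    + rewrite <- H4 at 2. apply sadd_spec; auto.
Qed.

Lemma proj_sinv A : inc A l1 -> f (sinv inc l1 O I A) = sinv inc l2 (f O) (f I) (f A).
Proof.
  intros HA1. unfold sinv. apply (pick_transport l1 l2 f); auto using proj_inj, proj_surj.
  - intros Y HY; apply HY.
  - intros Y HY; apply HY.
  - intros Y HY. rewrite <- proj_smul; auto. split; intros [H1 H2]; split; auto.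
    + apply proj_inc; auto.
    + rewrite H2; auto.
    + apply proj_inj; auto. apply smul_inc; auto.
  - intros Y Y' [H1 H2] [H3 H4].
    assert (HAO : A <> O).
    { intros ->. apply HOI. rewrite <- H2.
      symmetry; apply (is_prod_0l l1 O I HO HI HOI Y); auto. apply smul_spec; auto. }
    apply (is_prod_inj_r l1 O I HO HI HOI A Y Y' I); auto.
    + rewrite <- H2 at 2. apply smul_spec; auto.
    + rewrite <- H4 at 2. apply smul_spec; auto.
Qed.

Lemma proj_ssub A B : inc A l1 -> inc B l1 ->
  f (ssub inc l1 O A B) = ssub inc l2 (f O) (f A) (f B).
Proof. intros HA1 HB1. unfold ssub. rewrite proj_sadd, proj_sopp; auto. apply sopp_inc; auto. Qed.

Lemma proj_ratio A B C : inc A l1 -> inc B l1 -> inc C l1 ->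
  f (ratio inc l1 O I A B C) = ratio inc l2 (f O) (f I) (f A) (f B) (f C).
Proof.
  intros HA1 HB1 HC1. unfold ratio.
  rewrite proj_smul, proj_sinv, !proj_ssub; unfold ssub; auto using sinv_inc, sadd_inc.
Qed.

End ProjectionIsomorphism.

Lemma parallel_projection_projects l1 l2 f O I : O <> I -> inc O l1 -> inc I l1 ->
  parallel_projection inc l1 l2 f ->
  exists d, ~ d ∥ l1 /\ ~ d ∥ l2 /\ forall P, inc P l1 -> projects l1 l2 d P (f P).
Proof.
  intros HOI HO HI [Hin [d [Hd Hl]]].
  assert (Hf : forall P, inc P l1 -> projects l1 l2 d P (f P)).
  { intros P HP. destruct (Hl P HP) as [m [? [? ?]]]. split; [|split]; eauto. }
  exists d. repeat split; auto.
  (* Otherwise every projecting line would be [l2], so [l1 = l2] would be parallel to [d]. *)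
  intro Hp. apply Hd.
  assert (G : forall P, inc P l1 -> inc P l2).
  { intros P HP. destruct (Hl P HP) as [m [H1 [H2 H3]]].
    rewrite <- (par_eq_of_common m l2 (f P)); auto. apply (par_trans m d l2); auto. }
  rewrite (line_unique O I l1 l2); auto.
Qed.

End DesarguesPlane.

Theorem mainTheorem12 (Pt Ln : Type) (inc : Pt -> Ln -> Prop)
  (HA : DesarguesPlane inc) (l1 l2 : Ln) (O I : Pt) (f : Pt -> Pt) :
  O <> I -> inc O l1 -> inc I l1 ->
  parallel_projection inc l1 l2 f ->
  forall A B C : Pt, inc A l1 -> inc B l1 -> inc C l1 -> B <> C ->
  f (ratio inc l1 O I A B C) = ratio inc l2 (f O) (f I) (f A) (f B) (f C).
Proof.
  intros HOI HO HI Hpp A B C HA1 HB1 HC1 _.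
  destruct (parallel_projection_projects Pt Ln inc HA l1 l2 f O I) as (d & Hd1 & Hd2 & Hf); auto.
  apply (proj_ratio Pt Ln inc HA l1 l2 d O I f); auto.
Qed.
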